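(* Let $T\in\mathbf B_m(\Omega)$ with $0\in\Omega$, and put $\mathcal H_n=\ker T^n$, $T_n=T|_{\mathcal H_n}$ (a nilpotent operator on a finite-dimensional space). If $S\in\mathcal C_T(\Omega)$, then $\phi_S$ is analytic on $\Omega$ and $S|_{\mathcal H_n}=\phi_S(T_n)$ for all $n\ge1$.
   Context: $\mathcal H$ is a complex separable Hilbert space. For a connected open $\Omega\subset\mathbb C$ and integer $m\ge1$, $\mathbf B_m(\Omega)$ is the set of $T\in\mathcal B(\mathcal H)$ with: $\Omega\subset\sigma(T)$; $\operatorname{Ran}(T-w)=\mathcal H$ for $w\in\Omega$; $\bigvee_{w\in\Omega}\ker(T-w)=\mathcal H$; $\dim\ker(T-w)=m$ for $w\in\Omega$. $\mathcal N_\lambda=\ker(T-\lambda)$. For $S$ in the commutant $\{T\}'$, $S\mathcal N_\lambda\subset\mathcal N_\lambda$ and $\Phi_S(\lambda)=S|_{\mathcal N_\lambda}$. $\mathcal C_T(\Omega)$ is the set of $S\in\{T\}'$ for which there is a scalar function $\phi_S$ on $\Omega$ with $\Phi_S(\lambda)=\phi_S(\lambda)I_{\mathcal N_\lambda}$ for all $\lambda\in\Omega$. $\phi_S(T_n)$ is defined by the holomorphic functional calculus (equivalently, by the Taylor polynomial of $\phi_S$ at $0$ of degree $n-1$). *)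

From Stdlib Require Import Reals.
Open Scope R_scope.

Definition CC : Type := (R * R)%type.
Definition Cre (z : CC) : R := fst z.
Definition Cim (z : CC) : R := snd z.
Definition C0 : CC := (0, 0).
Definition C1 : CC := (1, 0).
Definition Cadd (z w : CC) : CC := (fst z + fst w, snd z + snd w).
Definition Copp (z : CC) : CC := (- fst z, - snd z).
Definition Csub (z w : CC) : CC := Cadd z (Copp w).
Definition Cmul (z w : CC) : CC :=
  (fst z * fst w - snd z * snd w, fst z * snd w + snd z * fst w).
Definition Cconj (z : CC) : CC := (fst z, - snd z).
Definition Cnorm (z : CC) : R := sqrt (fst z * fst z + snd z * snd z).
Fixpoint Cpow (z : CC) (n : nat) : CC :=
  match n with O => C1 | S k => Cmul (Cpow z k) z end.

Fixpoint Cpsum (a : nat -> CC) (z0 z : CC) (N : nat) : CC :=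
  match N with
  | O => C0
  | S k => Cadd (Cpsum a z0 z k) (Cmul (a k) (Cpow (Csub z z0) k))
  end.

Definition power_series_converges_to (a : nat -> CC) (z0 z l : CC) : Prop :=
  forall eps, 0 < eps -> exists N0 : nat, forall N : nat, (N0 <= N)%nat ->
    Cnorm (Csub (Cpsum a z0 z N) l) < eps.

Definition Copen (U : CC -> Prop) : Prop :=
  forall z, U z -> exists r, 0 < r /\ forall w, Cnorm (Csub w z) < r -> U w.

Definition Cconnected (Om : CC -> Prop) : Prop :=
  ~ (exists U V : CC -> Prop, Copen U /\ Copen V /\
       (forall z, Om z -> U z \/ V z) /\
       (exists z, Om z /\ U z) /\ (exists z, Om z /\ V z) /\
       (forall z, Om z -> U z -> V z -> False)).

Definition analytic_on (Om : CC -> Prop) (phi : CC -> CC) : Prop :=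
  forall z0, Om z0 -> exists r, 0 < r /\ exists a : nat -> CC,
    forall z, Cnorm (Csub z z0) < r -> power_series_converges_to a z0 z (phi z).

Record HilbertSpace := {
  hcarrier :> Type;
  vzero : hcarrier;
  vadd : hcarrier -> hcarrier -> hcarrier;
  vopp : hcarrier -> hcarrier;
  vscale : CC -> hcarrier -> hcarrier;
  inner : hcarrier -> hcarrier -> CC;
  vadd_assoc : forall x y z, vadd x (vadd y z) = vadd (vadd x y) z;
  vadd_comm : forall x y, vadd x y = vadd y x;
  vadd_0 : forall x, vadd x vzero = x;
  vadd_opp : forall x, vadd x (vopp x) = vzero;
  vscale_1 : forall x, vscale C1 x = x;
  vscale_assoc : forall a b x, vscale a (vscale b x) = vscale (Cmul a b) x;
  vscale_distr_v : forall a x y, vscale a (vadd x y) = vadd (vscale a x) (vscale a y);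
  vscale_distr_c : forall a b x, vscale (Cadd a b) x = vadd (vscale a x) (vscale b x);
  inner_add_l : forall x y z, inner (vadd x y) z = Cadd (inner x z) (inner y z);
  inner_scale_l : forall a x y, inner (vscale a x) y = Cmul a (inner x y);
  inner_conj : forall x y, inner y x = Cconj (inner x y);
  inner_pos : forall x, 0 <= Cre (inner x x);
  inner_def : forall x, inner x x = C0 -> x = vzero;
  complete : forall u : nat -> hcarrier,
    (forall eps, 0 < eps -> exists N, forall p q, (N <= p)%nat -> (N <= q)%nat ->
       sqrt (Cre (inner (vadd (u p) (vopp (u q))) (vadd (u p) (vopp (u q))))) < eps) ->
    exists l, forall eps, 0 < eps -> exists N, forall p, (N <= p)%nat ->
       sqrt (Cre (inner (vadd (u p) (vopp l)) (vadd (u p) (vopp l)))) < eps;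
  separable : exists d : nat -> hcarrier, forall x eps, 0 < eps -> exists k,
       sqrt (Cre (inner (vadd x (vopp (d k))) (vadd x (vopp (d k))))) < eps
}.

Arguments vzero {h}.
Arguments vadd {h}.
Arguments vopp {h}.
Arguments vscale {h}.
Arguments inner {h}.

Definition vsub {H : HilbertSpace} (x y : H) : H := vadd x (vopp y).
Definition hnorm {H : HilbertSpace} (x : H) : R := sqrt (Cre (inner x x)).

Definition bounded_op {H : HilbertSpace} (A : H -> H) : Prop :=
  (forall x y, A (vadd x y) = vadd (A x) (A y)) /\
  (forall a x, A (vscale a x) = vscale a (A x)) /\
  (exists M, forall x, hnorm (A x) <= M * hnorm x).

Definition op_shift {H : HilbertSpace} (A : H -> H) (w : CC) : H -> H :=
  fun x => vsub (A x) (vscale w x).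

Definition in_spectrum {H : HilbertSpace} (A : H -> H) (w : CC) : Prop :=
  ~ (exists B : H -> H, bounded_op B /\
       (forall x, B (op_shift A w x) = x) /\ (forall x, op_shift A w (B x) = x)).

Fixpoint vsum {H : HilbertSpace} (n : nat) (f : nat -> H) : H :=
  match n with O => vzero | S k => vadd (vsum k f) (f k) end.

Inductive in_span {H : HilbertSpace} (P : H -> Prop) : H -> Prop :=
  | span_zero : in_span P vzero
  | span_step : forall (a : CC) (y z : H), P y -> in_span P z ->
                  in_span P (vadd (vscale a y) z).

Definition closed_span_is_whole {H : HilbertSpace} (P : H -> Prop) : Prop :=
  forall x : H, forall eps, 0 < eps -> exists y, in_span P y /\ hnorm (vsub x y) < eps.

Definition eigenspace {H : HilbertSpace} (A : H -> H) (w : CC) (x : H) : Prop :=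
  A x = vscale w x.

Definition kernel_dim {H : HilbertSpace} (A : H -> H) (w : CC) (m : nat) : Prop :=
  exists e : nat -> H,
    (forall i, (i < m)%nat -> eigenspace A w (e i)) /\
    (forall c : nat -> CC, vsum m (fun i => vscale (c i) (e i)) = vzero ->
        forall i, (i < m)%nat -> c i = C0) /\
    (forall x, eigenspace A w x -> exists c : nat -> CC,
        x = vsum m (fun i => vscale (c i) (e i))).

Definition CowenDouglas {H : HilbertSpace} (m : nat) (Om : CC -> Prop) (T : H -> H) : Prop :=
  bounded_op T /\
  (forall w, Om w -> in_spectrum T w) /\
  (forall w, Om w -> forall y : H, exists x, op_shift T w x = y) /\
  closed_span_is_whole (fun x => exists w, Om w /\ eigenspace T w x) /\
  (forall w, Om w -> kernel_dim T w m).

Definition in_commutant {H : HilbertSpace} (T S : H -> H) : Prop :=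
  bounded_op S /\ forall x, S (T x) = T (S x).

(** S in C_T(Omega) with scalar function phi: Phi_S(lambda) = phi(lambda) I *)
Definition scalar_on_eigenspaces {H : HilbertSpace} (Om : CC -> Prop) (T S : H -> H)
    (phi : CC -> CC) : Prop :=
  forall lam, Om lam -> forall x, eigenspace T lam x -> S x = vscale (phi lam) x.

From Stdlib Require Import Reals Lra Lia Psatz Classical ClassicalEpsilon.
Require Coquelicot.Complex.
Open Scope R_scope.

(* Since [T - w] is a bounded surjection for [w] in [Om], the open mapping theorem provides
   preimages of controlled norm. Hence an eigenvector [e_0] of [T] for [l] (and, for [l = 0],
   the chain [T^(n-1) x, ..., T x, x] of a vector with [T^n x = 0]) extends to a Jordan chain
   [(T - l) e_(k+1) = e_k] with geometrically bounded norms. For small [t] the series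
   [g(t) = sum_k t^k e_k] converges and [(T - l - t) g(t) = 0], so [S g(t) = phi(l + t) g(t)];
   pairing with a fixed vector [y] gives the scalar identity
   [sum_k t^k <S e_k, y> = phi(l + t) sum_k t^k <e_k, y>].
   With [y = e_0] the second series is nonzero at [t = 0], so [phi(l + .)] is a quotient of
   convergent power series, hence analytic. With [l = 0] and the chain through [x], comparing
   the coefficients of [t^(n-1)] gives [<S x, y> = sum_(k<n) a_k <T^k x, y>] for every [y]. *)

(** * Complex numbers *)

Lemma CC_ring_theory : ring_theory C0 C1 Cadd Cmul Csub Copp (@eq CC).
Proof.
  split; intros; repeat match goal with z : CC |- _ => destruct z end;
    unfold Csub, Cadd, Copp, Cmul, C0, C1; simpl; f_equal; ring.
Qed.
Add Ring CC_ring : CC_ring_theory.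

(* [CC], [Cadd], [Cmul] are convertible to Coquelicot's [C], [Cplus], [Cmult]. *)
Lemma Cnorm_Cmod z : Cnorm z = Complex.Cmod z.
Proof. unfold Cnorm, Complex.Cmod. f_equal. simpl. ring. Qed.

Lemma Cnorm_ge0 z : 0 <= Cnorm z.
Proof. apply sqrt_pos. Qed.

Lemma Cnorm_mul z w : Cnorm (Cmul z w) = Cnorm z * Cnorm w.
Proof. rewrite !Cnorm_Cmod. apply Complex.Cmod_mult. Qed.

Lemma Cnorm_add_le z w : Cnorm (Cadd z w) <= Cnorm z + Cnorm w.
Proof. rewrite !Cnorm_Cmod. apply Complex.Cmod_triangle. Qed.

Lemma Cnorm_opp z : Cnorm (Copp z) = Cnorm z.
Proof. unfold Cnorm, Copp; simpl. f_equal. ring. Qed.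

Lemma Cnorm_sub_le z w : Cnorm (Csub z w) <= Cnorm z + Cnorm w.
Proof. unfold Csub. rewrite <- (Cnorm_opp w). apply Cnorm_add_le. Qed.

Lemma Cnorm_sub_sym z w : Cnorm (Csub z w) = Cnorm (Csub w z).
Proof. replace (Csub z w) with (Copp (Csub w z)) by ring. apply Cnorm_opp. Qed.

Lemma Cnorm_sub_triangle z w u : Cnorm (Csub z w) <= Cnorm (Csub z u) + Cnorm (Csub u w).
Proof. replace (Csub z w) with (Cadd (Csub z u) (Csub u w)) by ring. apply Cnorm_add_le. Qed.

Lemma Cnorm_real r : Cnorm (r, 0) = Rabs r.
Proof. unfold Cnorm; simpl. rewrite Rmult_0_l, Rplus_0_r. apply sqrt_Rsqr_abs. Qed.

Lemma Cnorm_C0 : Cnorm C0 = 0.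
Proof. unfold C0. rewrite Cnorm_real. apply Rabs_R0. Qed.

Lemma Cnorm_C1 : Cnorm C1 = 1.
Proof. unfold C1. rewrite Cnorm_real. apply Rabs_R1. Qed.

Lemma Cnorm_eq0 z : Cnorm z = 0 -> z = C0.
Proof. rewrite Cnorm_Cmod. apply Complex.Cmod_eq_0. Qed.

Lemma Cnorm_pos z : z <> C0 -> 0 < Cnorm z.
Proof.
  intros hz. destruct (Cnorm_ge0 z) as [h|h]; auto.
  symmetry in h. apply Cnorm_eq0 in h. contradiction.
Qed.

Lemma Cnorm_pow z k : Cnorm (Cpow z k) = Cnorm z ^ k.
Proof. induction k; simpl. apply Cnorm_C1. rewrite Cnorm_mul, IHk. ring. Qed.

Lemma Cpow_add z j k : Cpow z (j + k) = Cmul (Cpow z j) (Cpow z k).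
Proof. induction k; simpl. rewrite Nat.add_0_r; ring. rewrite Nat.add_succ_r; simpl; rewrite IHk; ring. Qed.

Lemma Cnorm_re z : Rabs (fst z) <= Cnorm z.
Proof.
  destruct z as [x y]; unfold Cnorm; simpl. rewrite <- sqrt_Rsqr_abs.
  apply sqrt_le_1_alt. unfold Rsqr. nra.
Qed.

Lemma Cnorm_im z : Rabs (snd z) <= Cnorm z.
Proof.
  destruct z as [x y]; unfold Cnorm; simpl. rewrite <- sqrt_Rsqr_abs.
  apply sqrt_le_1_alt. unfold Rsqr. nra.
Qed.

Lemma Cnorm_le_re_im z : Cnorm z <= Rabs (fst z) + Rabs (snd z).
Proof.
  destruct z as [x y]; simpl.
  replace (Cnorm (x, y)) with (Cnorm (Cadd (x, 0) (0, y))) by (unfold Cadd; simpl; do 3 f_equal; ring).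
  eapply Rle_trans. apply Cnorm_add_le. rewrite Cnorm_real.
  replace (Cnorm (0, y)) with (Rabs y). lra.
  unfold Cnorm; simpl. rewrite Rmult_0_l, Rplus_0_l. symmetry. apply sqrt_Rsqr_abs.
Qed.

Definition Cinv (z : CC) : CC := Complex.Cinv z.

Lemma Cmul_inv_r z : z <> C0 -> Cmul z (Cinv z) = C1.
Proof. exact (Complex.Cinv_r z). Qed.

Lemma Cnorm_inv z : z <> C0 -> Cnorm (Cinv z) = / Cnorm z.
Proof. intros hz. rewrite !Cnorm_Cmod. exact (Complex.Cmod_inv z hz). Qed.

Lemma Cmul_reg_r z w u : u <> C0 -> Cmul z u = Cmul w u -> z = w.
Proof.
  intros hu e. replace z with (Cmul (Cmul z u) (Cinv u)).
  - rewrite e. replace (Cmul (Cmul w u) (Cinv u)) with (Cmul w (Cmul u (Cinv u))) by ring.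
    rewrite Cmul_inv_r by exact hu. ring.
  - replace (Cmul (Cmul z u) (Cinv u)) with (Cmul z (Cmul u (Cinv u))) by ring.
    rewrite Cmul_inv_r by exact hu. ring.
Qed.

(** * Vectors and the Hilbert norm *)

Section Vectors.
Context {H : HilbertSpace}.
Implicit Types (x y z : H).

Lemma vadd_0_l x : vadd vzero x = x.
Proof. rewrite vadd_comm. apply vadd_0. Qed.

Lemma vadd_cancel_l (a x y : H) : vadd a x = vadd a y -> x = y.
Proof.
  intros h. assert (h2 : vadd (vopp a) (vadd a x) = vadd (vopp a) (vadd a y)) by (rewrite h; auto).
  rewrite !vadd_assoc, (vadd_comm _ (vopp a) a), vadd_opp, !vadd_0_l in h2. exact h2.
Qed.

Lemma vscale_C0 x : vscale C0 x = vzero.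
Proof.
  apply (vadd_cancel_l (vscale C0 x)). rewrite vadd_0, <- vscale_distr_c. f_equal. ring.
Qed.

Lemma vscale_vzero a : vscale a (@vzero H) = vzero.
Proof. rewrite <- (vscale_C0 vzero), vscale_assoc. f_equal. ring. Qed.

Lemma vopp_scale x : vopp x = vscale (Copp C1) x.
Proof.
  apply (vadd_cancel_l x). rewrite vadd_opp. rewrite <- (vscale_1 H x) at 1.
  rewrite <- vscale_distr_c. replace (Cadd C1 (Copp C1)) with C0 by ring.
  symmetry; apply vscale_C0.
Qed.

Lemma vopp_add x y : vopp (vadd x y) = vadd (vopp x) (vopp y).
Proof. rewrite !vopp_scale. apply vscale_distr_v. Qed.

Lemma vopp_opp x : vopp (vopp x) = x.
Proof. rewrite !vopp_scale, vscale_assoc. rewrite <- (vscale_1 H x) at 2. f_equal. ring. Qed.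

Lemma vsub_diag x : vsub x x = vzero.
Proof. apply vadd_opp. Qed.

Lemma vsub_vzero x : vsub x vzero = x.
Proof. unfold vsub. rewrite vopp_scale, vscale_vzero. apply vadd_0. Qed.

Lemma vsub_add x y : vadd (vsub x y) y = x.
Proof. unfold vsub. rewrite <- vadd_assoc, (vadd_comm _ (vopp y) y), vadd_opp. apply vadd_0. Qed.

Lemma vsub_sub_cancel_l x y : vsub (vsub x y) x = vopp y.
Proof.
  unfold vsub. rewrite <- vadd_assoc, (vadd_comm _ (vopp y)), vadd_assoc, vadd_opp. apply vadd_0_l.
Qed.

Lemma vsub_eq0 x y : vsub x y = vzero -> x = y.
Proof. intros h. rewrite <- (vsub_add x y), h. apply vadd_0_l. Qed.

Lemma vsub_opp x y : vsub y x = vopp (vsub x y).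
Proof. unfold vsub. rewrite vopp_add, vopp_opp, vadd_comm. reflexivity. Qed.

Lemma vsub_split x y z : vsub x z = vadd (vsub x y) (vsub y z).
Proof.
  unfold vsub. rewrite <- vadd_assoc, (vadd_assoc _ (vopp y) y), (vadd_comm _ (vopp y) y).
  rewrite vadd_opp, vadd_0_l. reflexivity.
Qed.

Lemma vsub_add_add (a b c d : H) : vsub (vadd a b) (vadd c d) = vadd (vsub a c) (vsub b d).
Proof.
  unfold vsub. rewrite vopp_add, <- !vadd_assoc. f_equal.
  rewrite !vadd_assoc. f_equal. apply vadd_comm.
Qed.

Lemma vsub_sub_sub (a b c d : H) : vsub (vsub a b) (vsub c d) = vsub (vsub a c) (vsub b d).
Proof.
  change (vsub a b) with (vadd a (vopp b)). change (vsub c d) with (vadd c (vopp d)).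
  rewrite vsub_add_add. unfold vsub at 3 5. rewrite vopp_add. reflexivity.
Qed.

Lemma vscale_sub a x y : vscale a (vsub x y) = vsub (vscale a x) (vscale a y).
Proof. unfold vsub. rewrite vscale_distr_v, !vopp_scale, !vscale_assoc. do 2 f_equal. ring. Qed.

Lemma inner_0_l y : inner vzero y = C0.
Proof. rewrite <- (vscale_C0 vzero), inner_scale_l. ring. Qed.

Lemma inner_add_r x y z : inner x (vadd y z) = Cadd (inner x y) (inner x z).
Proof.
  rewrite inner_conj, inner_add_l, (inner_conj _ y x), (inner_conj _ z x).
  destruct (inner x y), (inner x z). unfold Cconj, Cadd; simpl. f_equal. ring.
Qed.

Lemma inner_scale_r a x y : inner x (vscale a y) = Cmul (Cconj a) (inner x y).
Proof.
  rewrite inner_conj, inner_scale_l, (inner_conj _ y x).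
  destruct a, (inner x y). unfold Cconj, Cmul; simpl. f_equal; ring.
Qed.

Lemma inner_sub_l x y z : inner (vsub x y) z = Csub (inner x z) (inner y z).
Proof. unfold vsub. rewrite inner_add_l, vopp_scale, inner_scale_l. ring. Qed.

Lemma inner_self_real x : inner x x = (Cre (inner x x), 0).
Proof.
  pose proof (inner_conj _ x x) as h. destruct (inner x x) as [a b].
  unfold Cconj in h; simpl in *. injection h as hb. f_equal. lra.
Qed.

Lemma hnorm_ge0 x : 0 <= hnorm x.
Proof. apply sqrt_pos. Qed.

Lemma hnorm_sq x : hnorm x * hnorm x = Cre (inner x x).
Proof. apply sqrt_sqrt, inner_pos. Qed.

Lemma Cnorm_inner_self x : Cnorm (inner x x) = hnorm x * hnorm x.
Proof. rewrite inner_self_real, Cnorm_real, hnorm_sq. apply Rabs_right, Rle_ge, inner_pos. Qed.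

Lemma hnorm_vzero : hnorm (@vzero H) = 0.
Proof. unfold hnorm. rewrite inner_0_l. apply sqrt_0. Qed.

Lemma hnorm_eq0 x : hnorm x = 0 -> x = vzero.
Proof.
  intros h. apply inner_def, Cnorm_eq0. rewrite Cnorm_inner_self, h. ring.
Qed.

Lemma hnorm_pos x : x <> vzero -> 0 < hnorm x.
Proof.
  intros hx. destruct (hnorm_ge0 x) as [h|h]; auto.
  symmetry in h. apply hnorm_eq0 in h. contradiction.
Qed.

Lemma hnorm_scale a x : hnorm (vscale a x) = Cnorm a * hnorm x.
Proof.
  unfold hnorm. rewrite inner_scale_l, inner_scale_r, inner_self_real.
  unfold Cnorm. rewrite <- sqrt_mult.
  - f_equal. destruct a as [p q]. unfold Cmul, Cconj, Cre; simpl. ring.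
  - destruct a; simpl; nra.
  - apply inner_pos.
Qed.

Lemma hnorm_opp x : hnorm (vopp x) = hnorm x.
Proof. rewrite vopp_scale, hnorm_scale, Cnorm_opp, Cnorm_C1. ring. Qed.

Lemma hnorm_sub_sym x y : hnorm (vsub x y) = hnorm (vsub y x).
Proof. rewrite (vsub_opp x y), hnorm_opp. reflexivity. Qed.

Lemma cauchy_schwarz x y : Cnorm (inner x y) <= hnorm x * hnorm y.
Proof.
  destruct (classic (y = vzero)) as [hy|hy].
  { subst. rewrite inner_conj, inner_0_l, hnorm_vzero.
    unfold Cconj, C0; simpl. rewrite Ropp_0, Cnorm_real, Rabs_R0. lra. }
  assert (hP : 0 < Cre (inner y y)) by (rewrite <- hnorm_sq; pose proof (hnorm_pos y hy); nra).
  set (P := Cre (inner y y)) in *.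
  destruct (inner x y) as [u v] eqn:Exy.
  assert (Eyx : inner y x = (u, -v)) by (rewrite inner_conj, Exy; reflexivity).
  (* expand 0 <= <x + s y, x + s y> at the minimizing scalar s = -<x,y>/<y,y> *)
  pose proof (inner_pos _ (vadd x (vscale (-u/P, -v/P) y))) as hpos.
  rewrite !inner_add_l, !inner_add_r, !inner_scale_l, !inner_scale_r in hpos.
  rewrite Exy, Eyx, (inner_self_real y), (inner_self_real x) in hpos.
  fold P in hpos. set (A := Cre (inner x x)) in *.
  unfold Cre, Cadd, Cmul, Cconj in hpos; simpl in hpos.
  assert (h1 : u*u + v*v <= A * P).
  { match type of hpos with 0 <= ?e =>
      assert (E : P * e = A*P - (u*u+v*v)) by (field; lra);
      assert (0 <= P*e) by (apply Rmult_le_pos; lra) end.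
    lra. }
  unfold Cnorm, hnorm; simpl. fold P A. rewrite <- sqrt_mult by (try apply inner_pos; lra).
  apply sqrt_le_1_alt. exact h1.
Qed.

Lemma hnorm_add_le x y : hnorm (vadd x y) <= hnorm x + hnorm y.
Proof.
  pose proof (cauchy_schwarz x y) as cs. pose proof (Cnorm_re (inner x y)) as cf.
  pose proof (hnorm_sq x) as sx. pose proof (hnorm_sq y) as sy.
  pose proof (hnorm_sq (vadd x y)) as sxy.
  rewrite !inner_add_l, !inner_add_r, (inner_self_real x), (inner_self_real y) in sxy.
  rewrite <- sx, <- sy, (inner_conj _ x y) in sxy.
  destruct (inner x y) as [u v]. unfold Cre, Cadd, Cconj in sxy; simpl in sxy, cf.
  pose proof (hnorm_ge0 x); pose proof (hnorm_ge0 y); pose proof (hnorm_ge0 (vadd x y)).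
  apply Rsqr_incr_0_var; unfold Rsqr; [|nra].
  rewrite sxy. pose proof (Rle_abs u). nra.
Qed.

Lemma hnorm_sub_le x y : hnorm (vsub x y) <= hnorm x + hnorm y.
Proof. unfold vsub. rewrite <- (hnorm_opp y). apply hnorm_add_le. Qed.

Lemma hnorm_sub_triangle x y z : hnorm (vsub x z) <= hnorm (vsub x y) + hnorm (vsub y z).
Proof. rewrite (vsub_split x y z). apply hnorm_add_le. Qed.

Lemma vector_eq_of_inner x y : (forall z, inner x z = inner y z) -> x = y.
Proof.
  intros h. apply vsub_eq0, inner_def. rewrite inner_sub_l, h. ring.
Qed.

End Vectors.

(** * Finite sums, limits and geometric series *)

Fixpoint rsum (n : nat) (f : nat -> R) : R :=
  match n with O => 0 | S k => rsum k f + f k end.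

Fixpoint csum (n : nat) (f : nat -> CC) : CC :=
  match n with O => C0 | S k => Cadd (csum k f) (f k) end.

Lemma rsum_le n f g : (forall k, (k < n)%nat -> f k <= g k) -> rsum n f <= rsum n g.
Proof.
  induction n; simpl; intros h. lra.
  pose proof (h n ltac:(lia)). assert (rsum n f <= rsum n g) by (apply IHn; intros; apply h; lia). lra.
Qed.

Lemma rsum_ge0 n f : (forall k, 0 <= f k) -> 0 <= rsum n f.
Proof. induction n; simpl; intros h. lra. pose proof (h n). pose proof (IHn h). lra. Qed.

Lemma rsum_elem_le n f j : (forall k, 0 <= f k) -> (j < n)%nat -> f j <= rsum n f.
Proof.
  induction n; intros h hj. lia. simpl. pose proof (h n). destruct (Nat.eq_dec j n) as [->|hne].
  - pose proof (rsum_ge0 n f h). lra.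
  - pose proof (IHn h ltac:(lia)). lra.
Qed.

Lemma rsum_scal n c f : rsum n (fun k => c * f k) = c * rsum n f.
Proof. induction n; simpl. ring. rewrite IHn. ring. Qed.

Lemma rsum_const n c : rsum n (fun _ => c) = INR n * c.
Proof. induction n; simpl. ring. rewrite IHn. destruct n; simpl; ring. Qed.

Lemma rsum_geom_le n h : 0 <= h < 1 -> rsum n (fun k => h ^ k) <= 1 / (1 - h).
Proof.
  intros hh. assert (e : rsum n (fun k => h ^ k) = (1 - h ^ n) / (1 - h)).
  { induction n; simpl. field; lra. rewrite IHn. field. lra. }
  rewrite e. unfold Rdiv. apply Rmult_le_compat_r.
  - left; apply Rinv_0_lt_compat; lra.
  - pose proof (pow_le h n). lra.
Qed.

Lemma geometric_tail_le K q d : 0 <= K -> rsum d (fun i => K * (1/2)^(q+i)) <= 2 * K * (1/2)^q.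
Proof.
  intros hK. replace (rsum d (fun i => K * (1/2)^(q+i))) with (K * (1/2)^q * rsum d (fun i => (1/2)^i)).
  - pose proof (rsum_geom_le d (1/2) ltac:(lra)) as hgeom. pose proof (pow_le (1/2) q ltac:(lra)).
    replace (1 / (1 - 1/2)) with 2 in hgeom by field.
    apply Rle_trans with (K * (1/2)^q * 2). apply Rmult_le_compat_l; nra. lra.
  - rewrite <- rsum_scal. clear hK. induction d; simpl. reflexivity. rewrite IHd, pow_add. ring.
Qed.

Lemma half_pow_eventually_lt C eps : 0 < eps -> exists N, forall n, (N <= n)%nat -> C * (1/2)^n < eps.
Proof.
  intros he. destruct (cv_pow_half C eps he) as [N hN]. exists N. intros n hn.
  specialize (hN n hn). unfold Rdist in hN. rewrite Rminus_0_r in hN.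
  replace (C * (1/2)^n) with (C / 2 ^ n) by (rewrite Rdiv_1_l, pow_inv; field; apply pow_nonzero; lra).
  eapply Rle_lt_trans. apply Rle_abs. exact hN.
Qed.

Lemma geometric_cauchy (d : nat -> nat -> R) K :
  (forall p q, d p q = d q p) -> (forall q j, d (q + j)%nat q <= K * (1/2)^q) ->
  forall eps, 0 < eps -> exists N, forall p q, (N <= p)%nat -> (N <= q)%nat -> d p q < eps.
Proof.
  intros hsym htail eps he. destruct (half_pow_eventually_lt K eps he) as [N hN].
  exists N. intros p q hp hq.
  assert (hle : forall a b, (N <= b <= a)%nat -> d a b < eps).
  { intros a b hab. replace a with (b + (a - b))%nat by lia.
    eapply Rle_lt_trans. apply htail. apply hN. lia. }
  destruct (Nat.le_ge_cases q p). apply hle; lia. rewrite hsym. apply hle; lia.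
Qed.

Lemma csum_ext n f g : (forall k, (k < n)%nat -> f k = g k) -> csum n f = csum n g.
Proof. induction n; simpl; intros h; auto. rewrite IHn, h; auto. Qed.

Lemma csum_S n f : csum (S n) f = Cadd (csum n f) (f n).
Proof. reflexivity. Qed.

Lemma csum_add n f g : csum n (fun k => Cadd (f k) (g k)) = Cadd (csum n f) (csum n g).
Proof. induction n; simpl. ring. rewrite IHn. ring. Qed.

Lemma csum_sub n f g : csum n (fun k => Csub (f k) (g k)) = Csub (csum n f) (csum n g).
Proof. induction n; simpl. ring. rewrite IHn. ring. Qed.

Lemma csum_mul_r n c f : Cmul (csum n f) c = csum n (fun k => Cmul (f k) c).
Proof. induction n; simpl. ring. rewrite <- IHn. ring. Qed.

Lemma csum_tail q d f : Csub (csum (q + d) f) (csum q f) = csum d (fun i => f (q + i)%nat).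
Proof.
  induction d; simpl. rewrite Nat.add_0_r. ring.
  rewrite Nat.add_succ_r. simpl. rewrite <- IHd. ring.
Qed.

Lemma Cnorm_csum_le n f : Cnorm (csum n f) <= rsum n (fun k => Cnorm (f k)).
Proof. induction n; simpl. rewrite Cnorm_C0. lra. eapply Rle_trans. apply Cnorm_add_le. lra. Qed.

Section VectorSums.
Context {H : HilbertSpace}.

Lemma vsum_ext n (f g : nat -> H) : (forall k, (k < n)%nat -> f k = g k) -> vsum n f = vsum n g.
Proof. induction n; simpl; intros h; auto. rewrite IHn, h; auto. Qed.

Lemma vsum_zero n (f : nat -> H) : (forall k, (k < n)%nat -> f k = vzero) -> vsum n f = vzero.
Proof.
  induction n; simpl; intros h; auto.
  rewrite IHn, (h n ltac:(lia)). apply vadd_0. intros k hk. apply h. lia.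
Qed.

Lemma vsum_tail q d (f : nat -> H) :
  vsub (vsum (q + d) f) (vsum q f) = vsum d (fun i => f (q + i)%nat).
Proof.
  induction d; simpl. rewrite Nat.add_0_r. apply vsub_diag.
  rewrite Nat.add_succ_r. simpl. rewrite <- IHd.
  unfold vsub. rewrite <- !vadd_assoc. f_equal. apply vadd_comm.
Qed.

Lemma hnorm_vsum_le n (f : nat -> H) : hnorm (vsum n f) <= rsum n (fun k => hnorm (f k)).
Proof. induction n; simpl. rewrite hnorm_vzero. lra. eapply Rle_trans. apply hnorm_add_le. lra. Qed.

Lemma inner_vsum_l n (f : nat -> H) y : inner (vsum n f) y = csum n (fun k => inner (f k) y).
Proof. induction n; simpl. apply inner_0_l. rewrite inner_add_l, IHn. reflexivity. Qed.

End VectorSums.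

Definition cconv (s : nat -> CC) (l : CC) : Prop :=
  forall eps, 0 < eps -> exists N, forall n, (N <= n)%nat -> Cnorm (Csub (s n) l) < eps.

Definition hconv {H : HilbertSpace} (u : nat -> H) (l : H) : Prop :=
  forall eps, 0 < eps -> exists N, forall n, (N <= n)%nat -> hnorm (vsub (u n) l) < eps.

Lemma cconv_unique s l l' : cconv s l -> cconv s l' -> l = l'.
Proof.
  intros h1 h2. replace l with (Cadd (Csub l l') l') by ring.
  replace (Csub l l') with C0. ring.
  symmetry. apply Cnorm_eq0. apply Rle_antisym. 2: apply Cnorm_ge0.
  apply Rnot_lt_le. intros hd. set (d := Cnorm (Csub l l')) in *.
  destruct (h1 (d/2)) as [N1 hN1]. lra. destruct (h2 (d/2)) as [N2 hN2]. lra.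
  specialize (hN1 (N1+N2)%nat ltac:(lia)). specialize (hN2 (N1+N2)%nat ltac:(lia)).
  pose proof (Cnorm_sub_triangle l l' (s (N1+N2)%nat)) as ht.
  rewrite (Cnorm_sub_sym l (s _)) in ht. fold d in ht. lra.
Qed.

Lemma cconv_ext s t l : (forall n, s n = t n) -> cconv s l -> cconv t l.
Proof. intros e h eps he. destruct (h eps he) as [N hN]. exists N. intros n hn. rewrite <- e. auto. Qed.

Lemma cconv_shift s l : cconv s l -> cconv (fun n => s (S n)) l.
Proof. intros h eps he. destruct (h eps he) as [N hN]. exists N. intros n hn. apply hN. lia. Qed.

Lemma cconv_of_geometric s l C : (forall n, Cnorm (Csub (s n) l) <= C * (1/2)^n) -> cconv s l.
Proof.
  intros h eps he. destruct (half_pow_eventually_lt C eps he) as [N hN].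
  exists N. intros n hn. eapply Rle_lt_trans. apply h. auto.
Qed.

Lemma cconv_add s t l l' : cconv s l -> cconv t l' -> cconv (fun n => Cadd (s n) (t n)) (Cadd l l').
Proof.
  intros h1 h2 eps he. destruct (h1 (eps/2)) as [N1 hN1]. lra. destruct (h2 (eps/2)) as [N2 hN2]. lra.
  exists (N1+N2)%nat. intros n hn. specialize (hN1 n ltac:(lia)). specialize (hN2 n ltac:(lia)).
  replace (Csub (Cadd (s n) (t n)) (Cadd l l')) with (Cadd (Csub (s n) l) (Csub (t n) l')) by ring.
  pose proof (Cnorm_add_le (Csub (s n) l) (Csub (t n) l')). lra.
Qed.

Lemma cconv_mul_l s l a : cconv s l -> cconv (fun n => Cmul a (s n)) (Cmul a l).
Proof.
  intros hc eps he. pose proof (Cnorm_ge0 a).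
  destruct (hc (eps / (Cnorm a + 1))) as [N hN]. apply Rdiv_lt_0_compat; lra.
  exists N. intros n hn. specialize (hN n hn).
  replace (Csub (Cmul a (s n)) (Cmul a l)) with (Cmul a (Csub (s n) l)) by ring.
  rewrite Cnorm_mul. pose proof (Cnorm_ge0 (Csub (s n) l)).
  apply Rmult_lt_compat_l with (r := Cnorm a + 1) in hN. 2: lra.
  replace ((Cnorm a + 1) * (eps / (Cnorm a + 1))) with eps in hN by (field; lra). nra.
Qed.

Lemma cconv_sub s t l l' : cconv s l -> cconv t l' -> cconv (fun n => Csub (s n) (t n)) (Csub l l').
Proof.
  intros h1 h2. apply (cconv_mul_l _ _ (Copp C1)) in h2.
  replace (Csub l l') with (Cadd l (Cmul (Copp C1) l')) by ring.
  eapply cconv_ext. 2: exact (cconv_add _ _ _ _ h1 h2). intros n. simpl. ring.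
Qed.

Lemma cconv_bounded s l : cconv s l -> exists B, forall n, Cnorm (s n) <= B.
Proof.
  intros h. destruct (h 1 Rlt_0_1) as [N hN].
  assert (fin : forall k, exists B, forall n, (n < k)%nat -> Cnorm (s n) <= B).
  { induction k. exists 0. intros; lia. destruct IHk as [B hB]. exists (Rmax B (Cnorm (s k))).
    intros n hn. destruct (Nat.eq_dec n k). subst. apply Rmax_r.
    apply Rle_trans with B. apply hB; lia. apply Rmax_l. }
  destruct (fin N) as [B hB]. exists (Rmax B (Cnorm l + 1)). intros n.
  destruct (Nat.lt_ge_cases n N) as [hn|hn].
  - apply Rle_trans with B; auto. apply Rmax_l.
  - apply Rle_trans with (Cnorm l + 1). 2: apply Rmax_r. specialize (hN n hn).
    replace (s n) with (Cadd (Csub (s n) l) l) by ring. pose proof (Cnorm_add_le (Csub (s n) l) l). lra.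
Qed.

Lemma cconv_mul s t l l' : cconv s l -> cconv t l' -> cconv (fun n => Cmul (s n) (t n)) (Cmul l l').
Proof.
  intros h1 h2. destruct (cconv_bounded s l h1) as [B hB].
  intros eps he. set (B' := Rabs B + 1). set (c := Cnorm l' + 1).
  assert (hB' : 0 < B') by (unfold B'; pose proof (Rabs_pos B); lra).
  assert (hc : 0 < c) by (unfold c; pose proof (Cnorm_ge0 l'); lra).
  destruct (h1 (eps / (2*c))) as [N1 hN1]. apply Rdiv_lt_0_compat; lra.
  destruct (h2 (eps / (2*B'))) as [N2 hN2]. apply Rdiv_lt_0_compat; lra.
  exists (N1+N2)%nat. intros n hn. specialize (hN1 n ltac:(lia)). specialize (hN2 n ltac:(lia)).
  replace (Csub (Cmul (s n) (t n)) (Cmul l l')) with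
    (Cadd (Cmul (s n) (Csub (t n) l')) (Cmul (Csub (s n) l) l')) by ring.
  eapply Rle_lt_trans. apply Cnorm_add_le. rewrite !Cnorm_mul.
  assert (Cnorm (s n) <= B') by (specialize (hB n); pose proof (Rle_abs B); unfold B'; lra).
  pose proof (Cnorm_ge0 (s n)). pose proof (Cnorm_ge0 (Csub (t n) l')).
  pose proof (Cnorm_ge0 (Csub (s n) l)). pose proof (Cnorm_ge0 l').
  apply Rmult_lt_compat_l with (r := B') in hN2; auto.
  replace (B' * (eps / (2*B'))) with (eps/2) in hN2 by (field; lra).
  apply Rmult_lt_compat_r with (r := c) in hN1; auto.
  replace (eps / (2*c) * c) with (eps/2) in hN1 by (field; lra).
  unfold c in *. nra.
Qed.

Lemma cconv_le s l z B N0 :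
  cconv s l -> (forall n, (N0 <= n)%nat -> Cnorm (Csub (s n) z) <= B) -> Cnorm (Csub l z) <= B.
Proof.
  intros hc hb. apply Rnot_lt_le. intros hlt.
  destruct (hc (Cnorm (Csub l z) - B)) as [N hN]. lra.
  specialize (hN (N + N0)%nat ltac:(lia)). specialize (hb (N + N0)%nat ltac:(lia)).
  pose proof (Cnorm_sub_triangle l z (s (N+N0)%nat)) as ht. rewrite (Cnorm_sub_sym l (s _)) in ht. lra.
Qed.

Lemma cseries_converges (f : nat -> CC) K :
  (forall k, Cnorm (f k) <= K * (1/2)^k) -> exists l, cconv (fun N => csum N f) l.
Proof.
  intros hf. assert (hK : 0 <= K) by (specialize (hf O); pose proof (Cnorm_ge0 (f O)); simpl in hf; lra).
  pose (d p q := Cnorm (Csub (csum p f) (csum q f))).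
  assert (hcau : forall eps, 0 < eps -> exists N, forall p q, (N <= p)%nat -> (N <= q)%nat -> d p q < eps).
  { apply (geometric_cauchy d (2 * K)).
    - intros p q. apply Cnorm_sub_sym.
    - intros q j. unfold d. rewrite csum_tail. eapply Rle_trans. apply Cnorm_csum_le.
      eapply Rle_trans. 2: apply (geometric_tail_le K q j hK). apply rsum_le. intros; apply hf. }
  (* completeness of CC, coordinatewise from that of R *)
  assert (hre : Cauchy_crit (fun n => fst (csum n f))).
  { intros eps he. destruct (hcau eps he) as [N hN]. exists N. intros p q hp hq.
    eapply Rle_lt_trans. 2: apply (hN p q hp hq).
    eapply Rle_trans. 2: apply Cnorm_re. unfold Rdist, Csub, Cadd, Copp; simpl. unfold Rminus. lra. }
  assert (him : Cauchy_crit (fun n => snd (csum n f))).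
  { intros eps he. destruct (hcau eps he) as [N hN]. exists N. intros p q hp hq.
    eapply Rle_lt_trans. 2: apply (hN p q hp hq).
    eapply Rle_trans. 2: apply Cnorm_im. unfold Rdist, Csub, Cadd, Copp; simpl. unfold Rminus. lra. }
  destruct (R_complete _ hre) as [l1 h1]. destruct (R_complete _ him) as [l2 h2].
  exists (l1, l2). intros eps he.
  destruct (h1 (eps/2)) as [N1 hN1]. lra. destruct (h2 (eps/2)) as [N2 hN2]. lra.
  exists (N1 + N2)%nat. intros n hn. specialize (hN1 n ltac:(lia)). specialize (hN2 n ltac:(lia)).
  unfold Rdist in *. eapply Rle_lt_trans. apply Cnorm_le_re_im. unfold Csub, Cadd, Copp; simpl.
  unfold Rminus in *. lra.
Qed.

Section VectorLimits.
Context {H : HilbertSpace}.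

Lemma hconv_unique (u : nat -> H) l l' : hconv u l -> hconv u l' -> l = l'.
Proof.
  intros h1 h2. apply vsub_eq0, hnorm_eq0. apply Rle_antisym. 2: apply hnorm_ge0.
  apply Rnot_lt_le. intros hd. set (d := hnorm (vsub l l')) in *.
  destruct (h1 (d/2)) as [N1 hN1]. lra. destruct (h2 (d/2)) as [N2 hN2]. lra.
  specialize (hN1 (N1+N2)%nat ltac:(lia)). specialize (hN2 (N1+N2)%nat ltac:(lia)).
  pose proof (hnorm_sub_triangle l (u (N1+N2)%nat) l') as ht.
  rewrite (hnorm_sub_sym l (u _)) in ht. fold d in ht. lra.
Qed.

Lemma hconv_ext (u v : nat -> H) l : (forall n, u n = v n) -> hconv u l -> hconv v l.
Proof. intros e h eps he. destruct (h eps he) as [N hN]. exists N. intros n hn. rewrite <- e. auto. Qed.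

Lemma hconv_shift (u : nat -> H) l : hconv u l -> hconv (fun n => u (S n)) l.
Proof. intros h eps he. destruct (h eps he) as [N hN]. exists N. intros n hn. apply hN. lia. Qed.

Lemma hconv_of_geometric (u : nat -> H) l C : (forall n, hnorm (vsub (u n) l) <= C * (1/2)^n) -> hconv u l.
Proof.
  intros h eps he. destruct (half_pow_eventually_lt C eps he) as [N hN].
  exists N. intros n hn. eapply Rle_lt_trans. apply h. auto.
Qed.

Lemma hconv_scale (u : nat -> H) l a : hconv u l -> hconv (fun n => vscale a (u n)) (vscale a l).
Proof.
  intros hc eps he. pose proof (Cnorm_ge0 a).
  destruct (hc (eps / (Cnorm a + 1))) as [N hN]. apply Rdiv_lt_0_compat; lra.
  exists N. intros n hn. rewrite <- vscale_sub, hnorm_scale. specialize (hN n hn).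
  pose proof (hnorm_ge0 (vsub (u n) l)).
  apply Rmult_lt_compat_l with (r := Cnorm a + 1) in hN. 2: lra.
  replace ((Cnorm a + 1) * (eps / (Cnorm a + 1))) with eps in hN by (field; lra). nra.
Qed.

Lemma hconv_le (u : nat -> H) l z B N0 :
  hconv u l -> (forall n, (N0 <= n)%nat -> hnorm (vsub (u n) z) <= B) -> hnorm (vsub l z) <= B.
Proof.
  intros hc hb. apply Rnot_lt_le. intros hlt.
  destruct (hc (hnorm (vsub l z) - B)) as [N hN]. lra.
  specialize (hN (N + N0)%nat ltac:(lia)). specialize (hb (N + N0)%nat ltac:(lia)).
  pose proof (hnorm_sub_triangle l (u (N+N0)%nat) z) as ht. rewrite (hnorm_sub_sym l (u _)) in ht. lra.
Qed.

Lemma cconv_inner (u : nat -> H) l y : hconv u l -> cconv (fun n => inner (u n) y) (inner l y).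
Proof.
  intros hc eps he. pose proof (hnorm_ge0 y).
  destruct (hc (eps / (hnorm y + 1))) as [N hN]. apply Rdiv_lt_0_compat; lra.
  exists N. intros n hn. rewrite <- inner_sub_l. eapply Rle_lt_trans. apply cauchy_schwarz.
  specialize (hN n hn). pose proof (hnorm_ge0 (vsub (u n) l)).
  apply Rmult_lt_compat_r with (r := hnorm y + 1) in hN. 2: lra.
  replace (eps / (hnorm y + 1) * (hnorm y + 1)) with eps in hN by (field; lra). nra.
Qed.

Lemma vseries_converges (f : nat -> H) K :
  (forall k, hnorm (f k) <= K * (1/2)^k) -> exists l, hconv (fun N => vsum N f) l.
Proof.
  intros hf. assert (hK : 0 <= K) by (specialize (hf O); pose proof (hnorm_ge0 (f O)); simpl in hf; lra).
  apply (complete H). apply (geometric_cauchy (fun p q => hnorm (vsub (vsum p f) (vsum q f))) (2 * K)).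
  - intros p q. apply hnorm_sub_sym.
  - intros q j. rewrite vsum_tail. eapply Rle_trans. apply hnorm_vsum_le.
    eapply Rle_trans. 2: apply (geometric_tail_le K q j hK). apply rsum_le. intros; apply hf.
Qed.

End VectorLimits.

Lemma recursive_sequence {A : Type} (R : nat -> A -> A -> Prop) (a0 : A) :
  (forall k a, exists b, R k a b) -> exists u : nat -> A, u O = a0 /\ forall k, R k (u k) (u (S k)).
Proof.
  intros h. destruct (choice (fun ka b => R (fst ka) (snd ka) b) (fun ka => h (fst ka) (snd ka))) as [f hf].
  exists (fix u k := match k with O => a0 | S j => f (j, u j) end).
  split; [reflexivity|]. intros k. exact (hf (k, _)).
Qed.

(** * Bounded operators and the open mapping theorem *)

Section OpenMapping.
Context {H : HilbertSpace}.
Implicit Types (A : H -> H) (x y z : H).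

Lemma bounded_op_vzero A : bounded_op A -> A vzero = vzero.
Proof. intros [_ [h _]]. rewrite <- (vscale_C0 vzero), h, !vscale_C0. reflexivity. Qed.

Lemma bounded_op_vsub A x y : bounded_op A -> A (vsub x y) = vsub (A x) (A y).
Proof. intros [ha [hs _]]. unfold vsub. rewrite ha, !vopp_scale, hs. reflexivity. Qed.

Lemma bounded_op_vsum A n f : bounded_op A -> A (vsum n f) = vsum n (fun k => A (f k)).
Proof.
  intros hA. induction n; simpl. apply bounded_op_vzero; auto.
  destruct hA as [ha _]. rewrite ha, IHn. reflexivity.
Qed.

Lemma bounded_op_norm A : bounded_op A -> exists M, 0 < M /\ forall x, hnorm (A x) <= M * hnorm x.
Proof.
  intros [_ [_ [M hM]]]. exists (Rabs M + 1). split. pose proof (Rabs_pos M); lra.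
  intros x. specialize (hM x). pose proof (hnorm_ge0 x). pose proof (Rle_abs M). nra.
Qed.

Lemma hconv_bounded_op A u l : bounded_op A -> hconv u l -> hconv (fun n => A (u n)) (A l).
Proof.
  intros hA hc. destruct (bounded_op_norm A hA) as [M [hM hb]].
  intros eps he. destruct (hc (eps / M)) as [N hN]. apply Rdiv_lt_0_compat; lra.
  exists N. intros n hn. rewrite <- bounded_op_vsub by auto.
  specialize (hN n hn). apply Rmult_lt_compat_l with (r := M) in hN; auto.
  replace (M * (eps / M)) with eps in hN by (field; lra).
  eapply Rle_lt_trans. apply hb. exact hN.
Qed.

Lemma op_shift_C0 A x : op_shift A C0 x = A x.
Proof. unfold op_shift. rewrite vscale_C0. apply vsub_vzero. Qed.

Lemma op_shift_bounded A l : bounded_op A -> bounded_op (op_shift A l).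
Proof.
  intros hA. destruct (bounded_op_norm A hA) as [M [hM hb]]. destruct hA as [ha [hs _]].
  unfold op_shift. split; [|split].
  - intros x y. rewrite ha, vscale_distr_v. apply vsub_add_add.
  - intros a x. rewrite hs, vscale_sub, !vscale_assoc. replace (Cmul l a) with (Cmul a l) by ring.
    reflexivity.
  - exists (M + Cnorm l). intros x. eapply Rle_trans. apply hnorm_sub_le.
    rewrite hnorm_scale. specialize (hb x). lra.
Qed.

Section Baire.
Variable P : nat -> H -> Prop.
Hypothesis P_closed : forall n y, ~ P n y -> exists e, 0 < e /\ forall z, hnorm (vsub z y) < e -> ~ P n z.
Hypothesis P_no_ball : forall n y0 d, 0 < d -> exists z, hnorm (vsub z y0) < d /\ ~ P n z.

(* One step of the nested-balls construction: a closed ball (center, radius) inside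
   the given one, four times smaller and disjoint from [P k]. *)
Definition nested_ball_step (k : nat) (b b' : H * R) : Prop :=
  0 < snd b -> 0 < snd b' /\ snd b' <= snd b / 4 /\
    hnorm (vsub (fst b') (fst b)) + snd b' <= snd b /\
    forall z, hnorm (vsub z (fst b')) <= snd b' -> ~ P k z.

Lemma nested_ball_step_exists k b : exists b', nested_ball_step k b b'.
Proof.
  destruct b as [x r]. destruct (Rlt_le_dec 0 r) as [hr|hr].
  2: { exists (x, r). intros h. simpl in h. lra. }
  destruct (P_no_ball k x (r/2) ltac:(lra)) as [z [hz hPz]].
  destruct (P_closed k z hPz) as [e [he hze]].
  exists (z, Rmin (e/2) (r/4)). intros _. simpl.
  pose proof (Rmin_l (e/2) (r/4)). pose proof (Rmin_r (e/2) (r/4)).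
  assert (0 < Rmin (e/2) (r/4)) by (apply Rmin_pos; lra).
  split; [auto|split; [lra|split; [lra|]]].
  intros w hw. apply hze. lra.
Qed.

Lemma baire_category : ~ forall y, exists n, P n y.
Proof.
  intros hcover.
  destruct (recursive_sequence nested_ball_step (vzero, 1) nested_ball_step_exists) as [b [hb0 hb]].
  assert (hrad : forall k, 0 < snd (b k) /\ snd (b k) <= (1/4)^k).
  { induction k. rewrite hb0; simpl; lra.
    destruct IHk as [h1 h2]. destruct (hb k h1) as [h3 [h4 _]]. simpl. lra. }
  assert (hnest : forall q j, hnorm (vsub (fst (b (q + j)%nat)) (fst (b q))) + snd (b (q + j)%nat) <= snd (b q)).
  { intros q j. induction j. rewrite Nat.add_0_r, vsub_diag, hnorm_vzero. lra.
    rewrite Nat.add_succ_r. destruct (hb (q + j)%nat (proj1 (hrad _))) as [_ [_ [h3 _]]].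
    pose proof (hnorm_sub_triangle (fst (b (S (q + j)))) (fst (b (q + j)%nat)) (fst (b q))). lra. }
  destruct (complete H (fun k => fst (b k))) as [l hl].
  { apply (geometric_cauchy (fun p q => hnorm (vsub (fst (b p)) (fst (b q)))) 1).
    - intros p q. apply hnorm_sub_sym.
    - intros q j. pose proof (hnest q j). pose proof (hrad (q + j)%nat). destruct (hrad q) as [_ hq].
      assert ((1/4)^q <= (1/2)^q) by (apply pow_incr; lra). lra. }
  destruct (hcover l) as [n hn].
  assert (hin : hnorm (vsub l (fst (b (S n)))) <= snd (b (S n))).
  { apply (hconv_le (fun k => fst (b k)) l _ _ (S n) hl). intros k hk.
    pose proof (hnest (S n) (k - S n)%nat) as hk'. replace (S n + (k - S n))%nat with k in hk' by lia.
    pose proof (hrad k). lra. }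
  destruct (hb n (proj1 (hrad n))) as [_ [_ [_ h4]]]. exact (h4 l hin hn).
Qed.

End Baire.

Definition approx_preimage A (C : R) y : Prop :=
  forall e, 0 < e -> exists x, hnorm x <= C /\ hnorm (vsub (A x) y) < e.

Lemma approx_preimage_closed A C y :
  ~ approx_preimage A C y -> exists e, 0 < e /\ forall z, hnorm (vsub z y) < e -> ~ approx_preimage A C z.
Proof.
  intros hn. apply not_all_ex_not in hn. destruct hn as [e0 he0].
  apply imply_to_and in he0. destruct he0 as [he0 hno].
  exists (e0/2). split. lra. intros z hz hz'. destruct (hz' (e0/2) ltac:(lra)) as [x [hx1 hx2]].
  apply hno. exists x. split; auto. pose proof (hnorm_sub_triangle (A x) z y). lra.
Qed.

Lemma approx_preimage_sub A C1 C2 y1 y2 : bounded_op A ->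
  approx_preimage A C1 y1 -> approx_preimage A C2 y2 -> approx_preimage A (C1 + C2) (vsub y1 y2).
Proof.
  intros hA h1 h2 e he.
  destruct (h1 (e/2) ltac:(lra)) as [x1 [hx1 hx1']]. destruct (h2 (e/2) ltac:(lra)) as [x2 [hx2 hx2']].
  exists (vsub x1 x2). split.
  - pose proof (hnorm_sub_le x1 x2). lra.
  - rewrite (bounded_op_vsub A x1 x2 hA), vsub_sub_sub. pose proof (hnorm_sub_le (vsub (A x1) y1) (vsub (A x2) y2)). lra.
Qed.

Lemma approx_preimage_scale A C y s : bounded_op A -> 0 < s ->
  approx_preimage A C y -> approx_preimage A (s * C) (vscale (s, 0) y).
Proof.
  intros [_ [hs _]] hs0 h e he. destruct (h (e / s)) as [x [hx hx']]. apply Rdiv_lt_0_compat; lra.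
  exists (vscale (s, 0) x). rewrite hs, <- vscale_sub, !hnorm_scale, Cnorm_real, Rabs_right by lra.
  split. apply Rmult_le_compat_l; lra.
  apply Rmult_lt_compat_l with (r := s) in hx'; auto. replace (s * (e / s)) with e in hx' by (field; lra). lra.
Qed.

(* Baire: some ball [A(ball(0, n))] is dense in a ball; translating it to the origin. *)
Lemma approx_preimage_ball A : bounded_op A -> (forall y, exists x, A x = y) ->
  exists C d, 0 < d /\ forall y, hnorm y < d -> approx_preimage A C y.
Proof.
  intros hA hsurj.
  assert (hcover : forall y, exists n, approx_preimage A (INR n) y).
  { intros y. destruct (hsurj y) as [x hx]. destruct (INR_archimed 1 (hnorm x)) as [n hn]. lra.
    exists n. intros e he. exists x. split. lra. rewrite hx, vsub_diag, hnorm_vzero. auto. }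
  destruct (classic (exists n y0 d, 0 < d /\ forall z, hnorm (vsub z y0) < d -> approx_preimage A (INR n) z))
    as [[n [y0 [d [hd hball]]]]|hno].
  - exists (INR n + INR n), d. split; auto. intros y hy.
    replace y with (vsub (vadd y0 y) y0).
    + apply approx_preimage_sub; auto; apply hball.
      * unfold vsub. rewrite (vadd_comm _ y0 y), <- vadd_assoc, vadd_opp, vadd_0. exact hy.
      * rewrite vsub_diag, hnorm_vzero. exact hd.
    + unfold vsub. rewrite (vadd_comm _ y0 y), <- vadd_assoc, vadd_opp. apply vadd_0.
  - exfalso. apply (baire_category (fun n => approx_preimage A (INR n))); auto.
    + intros n y. apply approx_preimage_closed.
    + intros n y0 d hd. apply NNPP. intros hnz. apply hno. exists n, y0, d. split; auto.
      intros z hz. apply NNPP. intros hz'. apply hnz. exists z. auto.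
Qed.

Lemma approximate_preimages A : bounded_op A -> (forall y, exists x, A x = y) ->
  exists M, 0 <= M /\ forall y, approx_preimage A (M * hnorm y) y.
Proof.
  intros hA hsurj. destruct (approx_preimage_ball A hA hsurj) as [C [d [hd hball]]].
  assert (hC : 0 <= C).
  { destruct (hball vzero ltac:(rewrite hnorm_vzero; lra) 1 Rlt_0_1) as [x [hx _]].
    pose proof (hnorm_ge0 x). lra. }
  exists (2 * C / d). split. apply Rmult_le_pos. lra. left; apply Rinv_0_lt_compat; lra.
  intros y. destruct (classic (y = vzero)) as [->|hy].
  { intros e he. exists vzero. rewrite (bounded_op_vzero A hA), vsub_diag, !hnorm_vzero. split; lra. }
  pose proof (hnorm_pos y hy) as hny.
  set (s := d / (2 * hnorm y)). assert (hs : 0 < s) by (unfold s; apply Rdiv_lt_0_compat; lra).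
  assert (hsy : hnorm (vscale (s, 0) y) < d).
  { rewrite hnorm_scale, Cnorm_real, Rabs_right by lra. unfold s.
    replace (d / (2 * hnorm y) * hnorm y) with (d/2) by (field; lra). lra. }
  pose proof (approx_preimage_scale A C _ (/ s) hA ltac:(apply Rinv_0_lt_compat; lra) (hball _ hsy)) as h.
  rewrite vscale_assoc in h. replace (Cmul (/ s, 0) (s, 0)) with C1 in h by (unfold Cmul, C1; simpl; f_equal; field; lra).
  rewrite vscale_1 in h. replace (2 * C / d * hnorm y) with (/ s * C) by (unfold s; field; lra). exact h.
Qed.

Theorem open_mapping A : bounded_op A -> (forall y, exists x, A x = y) ->
  exists c, 0 <= c /\ forall y, exists x, A x = y /\ hnorm x <= c * hnorm y.
Proof.
  intros hA hsurj. destruct (approximate_preimages A hA hsurj) as [M [hM happ]].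
  assert (hstep : forall y, exists x, hnorm x <= M * hnorm y /\ hnorm (vsub y (A x)) <= hnorm y / 2).
  { intros y. destruct (classic (y = vzero)) as [->|hy].
    - exists vzero. rewrite (bounded_op_vzero A hA), vsub_diag, !hnorm_vzero. split; lra.
    - pose proof (hnorm_pos y hy). destruct (happ y (hnorm y / 2) ltac:(lra)) as [x [h1 h2]].
      exists x. rewrite hnorm_sub_sym. split; lra. }
  destruct (choice _ hstep) as [xf hxf].
  exists (2 * M). split. lra. intros y.
  (* correct the residual [r k] repeatedly; the corrections form a convergent series *)
  set (r k := Nat.iter k (fun v => vsub v (A (xf v))) y).
  assert (hr : forall k, hnorm (r k) <= hnorm y * (1/2)^k).
  { induction k. simpl. lra. destruct (hxf (r k)) as [_ h]. simpl in h |- *. fold (r k). lra. }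
  assert (hx : forall k, hnorm (xf (r k)) <= M * hnorm y * (1/2)^k).
  { intros k. destruct (hxf (r k)) as [h _]. pose proof (hr k). rewrite Rmult_assoc. nra. }
  destruct (vseries_converges (fun k => xf (r k)) (M * hnorm y) hx) as [x hconvx].
  assert (hsum : forall N, A (vsum N (fun k => xf (r k))) = vsub y (r N)).
  { induction N; simpl.
    - rewrite (bounded_op_vzero A hA), vsub_diag. reflexivity.
    - destruct hA as [ha _]. rewrite ha, IHN. fold (r N). unfold vsub.
      rewrite vopp_add, vopp_opp, <- vadd_assoc. reflexivity. }
  exists x. split.
  - apply (hconv_unique (fun N => A (vsum N (fun k => xf (r k))))).
    + apply hconv_bounded_op; auto.
    + apply (hconv_of_geometric _ _ (hnorm y)). intros n. rewrite hsum.
      rewrite vsub_sub_cancel_l, hnorm_opp. apply hr.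
  - rewrite <- (vsub_vzero x). apply (hconv_le _ _ _ _ O hconvx). intros n _.
    rewrite vsub_vzero. eapply Rle_trans. apply hnorm_vsum_le.
    replace (2 * M * hnorm y) with (2 * (M * hnorm y) * (1/2)^0) by (simpl; ring).
    eapply Rle_trans. 2: apply (geometric_tail_le (M * hnorm y) 0 n); pose proof (hnorm_ge0 y); nra.
    apply rsum_le. intros k _. apply hx.
Qed.

Definition jordan_chain A (e : nat -> H) : Prop := A (e O) = vzero /\ forall k, A (e (S k)) = e k.

Lemma preimage_chain A c : 0 <= c -> (forall y, exists x, A x = y /\ hnorm x <= c * hnorm y) ->
  forall v, exists f : nat -> H, f O = v /\ (forall k, A (f (S k)) = f k) /\
    forall k, hnorm (f k) <= hnorm v * c ^ k.
Proof.
  intros hc hpre v.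
  destruct (recursive_sequence (fun _ y x => A x = y /\ hnorm x <= c * hnorm y) v (fun _ => hpre))
    as [f [hf0 hf]].
  exists f. split; [exact hf0|split]. intros k. apply hf.
  induction k. rewrite hf0. simpl. lra. destruct (hf k) as [_ h]. simpl.
  apply Rle_trans with (c * hnorm (f k)); auto.
  replace (hnorm v * (c * c ^ k)) with (c * (hnorm v * c^k)) by ring. apply Rmult_le_compat_l; auto.
Qed.

End OpenMapping.

(** * Convergent power series *)

Definition psum (c : nat -> CC) (t : CC) (N : nat) : CC := csum N (fun k => Cmul (c k) (Cpow t k)).

Definition conv (a b : nat -> CC) (k : nat) : CC := csum (S k) (fun j => Cmul (a j) (b (k - j)%nat)).

Lemma power_series_converges_to_psum a z0 z l :
  power_series_converges_to a z0 z l <-> cconv (psum a (Csub z z0)) l.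
Proof.
  assert (e : forall N, Cpsum a z0 z N = psum a (Csub z z0) N)
    by (unfold psum; induction N; simpl; congruence).
  unfold power_series_converges_to, cconv. split; intros h eps he; destruct (h eps he) as [N hN];
    exists N; intros n hn; specialize (hN n hn); rewrite e in *; exact hN.
Qed.

Lemma psum_S_shift c t N : psum c t (S N) = Cadd (c O) (Cmul t (psum (fun k => c (S k)) t N)).
Proof.
  unfold psum. induction N. simpl. ring.
  change (csum (S (S N)) ?f) with (Cadd (csum (S N) f) (f (S N))). rewrite IHN. simpl. ring.
Qed.

Lemma pow_bound_mul K Q a h k : 0 <= Q -> 0 <= a -> a * Q <= h -> K * Q ^ k * a ^ k <= Rabs K * h ^ k.
Proof.
  intros hQ ha hh. rewrite Rmult_assoc, <- Rpow_mult_distr.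
  assert (0 <= (Q * a) ^ k) by (apply pow_le; nra).
  assert ((Q * a) ^ k <= h ^ k) by (apply pow_incr; nra).
  pose proof (Rle_abs K). pose proof (Rabs_pos K).
  apply Rle_trans with (Rabs K * (Q * a) ^ k). nra. apply Rmult_le_compat_l; auto.
Qed.

Lemma coef_bound_mono (c : nat -> CC) K Q Q' : 0 <= K -> 0 <= Q <= Q' ->
  (forall k, Cnorm (c k) <= K * Q ^ k) -> forall k, Cnorm (c k) <= K * Q' ^ k.
Proof. intros hK hQ h k. eapply Rle_trans. apply h. apply Rmult_le_compat_l; auto. apply pow_incr; auto. Qed.

Lemma ps_term_bound c K Q t h k : 0 <= Q -> Cnorm t * Q <= h -> (forall k, Cnorm (c k) <= K * Q ^ k) ->
  Cnorm (Cmul (c k) (Cpow t k)) <= Rabs K * h ^ k.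
Proof.
  intros hQ ht hc. rewrite Cnorm_mul, Cnorm_pow.
  apply Rle_trans with (K * Q ^ k * Cnorm t ^ k).
  - apply Rmult_le_compat_r. apply pow_le, Cnorm_ge0. apply hc.
  - apply pow_bound_mul; auto using Cnorm_ge0.
Qed.

Lemma ps_converges c K Q t : 0 <= Q -> Cnorm t * Q <= 1/2 -> (forall k, Cnorm (c k) <= K * Q ^ k) ->
  exists L, cconv (psum c t) L.
Proof. intros hQ ht hc. apply (cseries_converges _ (Rabs K)). intros k. eapply ps_term_bound; eauto. Qed.

Lemma ps_limit_near_constant c K Q t L : 0 <= Q -> Cnorm t * Q <= 1/2 ->
  (forall k, Cnorm (c k) <= K * Q ^ k) -> cconv (psum c t) L ->
  Cnorm (Csub L (c O)) <= 2 * Rabs K * Q * Cnorm t.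
Proof.
  intros hQ ht hc hL. apply (cconv_le _ _ _ _ 1 hL). intros n hn.
  destruct n as [|N]. lia. rewrite psum_S_shift.
  replace (Csub (Cadd (c O) (Cmul t (psum (fun k => c (S k)) t N))) (c O))
    with (Cmul t (psum (fun k => c (S k)) t N)) by ring.
  rewrite Cnorm_mul. pose proof (Cnorm_ge0 t).
  assert (Cnorm (psum (fun k => c (S k)) t N) <= 2 * Rabs K * Q).
  { replace (2 * Rabs K * Q) with (2 * Rabs (K * Q) * (1/2)^0)
      by (rewrite Rabs_mult, (Rabs_right Q) by lra; simpl; ring).
    eapply Rle_trans. apply Cnorm_csum_le.
    eapply Rle_trans. 2: apply (geometric_tail_le (Rabs (K * Q)) 0 N (Rabs_pos _)).
    apply rsum_le. intros k _. apply (ps_term_bound (fun k => c (S k)) (K * Q) Q); auto.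
    intros j. rewrite hc. simpl. lra. }
  nra.
Qed.

Lemma zero_of_small x C d0 : 0 < d0 -> 0 <= x -> 0 <= C -> (forall d, 0 < d < d0 -> x <= C * d) -> x = 0.
Proof.
  intros hd hx hC h. destruct hx as [hx|hx]; auto. exfalso.
  set (d := Rmin (d0/2) (x / (2*(C+1)))).
  assert (0 < d) by (unfold d; apply Rmin_pos; [lra| apply Rdiv_lt_0_compat; lra]).
  assert (d <= d0/2) by apply Rmin_l. assert (d <= x / (2*(C+1))) by apply Rmin_r.
  specialize (h d ltac:(lra)).
  assert (C * d <= C * (x / (2*(C+1)))) by (apply Rmult_le_compat_l; lra).
  assert (C * (x / (2*(C+1))) < x).
  { replace (C * (x / (2*(C+1)))) with (x * (C / (2*(C+1)))) by (field; lra).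
    assert (C / (2*(C+1)) < 1).
    { apply Rmult_lt_reg_r with (2*(C+1)). lra.
      replace (C / (2*(C+1)) * (2*(C+1))) with C by (field; lra). lra. }
    nra. }
  lra.
Qed.

Definition near_zero (P : CC -> Prop) : Prop := exists r, 0 < r /\ forall t, Cnorm t < r -> P t.

Lemma near_zero_impl (P P' : CC -> Prop) : (forall t, P t -> P' t) -> near_zero P -> near_zero P'.
Proof. intros h [r [hr hP]]. exists r. split; auto. Qed.

Lemma near_zero_and (P P' : CC -> Prop) : near_zero P -> near_zero P' -> near_zero (fun t => P t /\ P' t).
Proof.
  intros [r [hr hP]] [r' [hr' hP']]. exists (Rmin r r'). split. apply Rmin_pos; auto.
  intros t ht. pose proof (Rmin_l r r'). pose proof (Rmin_r r r'). split; [apply hP|apply hP']; lra.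
Qed.

Lemma near_zero_norm_lt r : 0 < r -> near_zero (fun t => Cnorm t < r).
Proof. intros hr. exists r. auto. Qed.

Lemma near_zero_norm_mul_le Q h : 0 <= Q -> 0 < h -> near_zero (fun t => Cnorm t * Q <= h).
Proof.
  intros hQ hh. exists (h / (Q + 1)). split. apply Rdiv_lt_0_compat; lra.
  intros t ht. apply Rmult_lt_compat_r with (r := Q + 1) in ht. 2: lra.
  replace (h / (Q + 1) * (Q + 1)) with h in ht by (field; lra). pose proof (Cnorm_ge0 t). nra.
Qed.

Lemma ps_coef_zero k : forall c K Q, 0 <= Q -> (forall j, Cnorm (c j) <= K * Q ^ j) ->
  near_zero (fun t => t <> C0 -> cconv (psum c t) C0) -> c k = C0.
Proof.
  assert (base : forall c K Q, 0 <= Q -> (forall j, Cnorm (c j) <= K * Q ^ j) ->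
    near_zero (fun t => t <> C0 -> cconv (psum c t) C0) -> c O = C0).
  { intros c K Q hQ hc hnear.
    destruct (near_zero_and _ _ hnear (near_zero_norm_mul_le Q (1/2) hQ ltac:(lra))) as [r [hr hrt]].
    apply Cnorm_eq0, (zero_of_small _ (2 * Rabs K * Q) r hr (Cnorm_ge0 _)).
    { pose proof (Rabs_pos K). nra. }
    intros d hd. assert (hnt : Cnorm (d, 0) = d) by (rewrite Cnorm_real; apply Rabs_right; lra).
    destruct (hrt (d, 0) ltac:(lra)) as [hconv hsmall].
    assert (hne : (d, 0) <> C0) by (intro e; injection e; lra).
    pose proof (ps_limit_near_constant c K Q (d,0) C0 hQ hsmall hc (hconv hne)) as hb.
    rewrite Cnorm_sub_sym, hnt in hb. replace (Csub (c O) C0) with (c O) in hb by ring. exact hb. }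
  induction k; intros c K Q hQ hc hnear.
  - eapply base; eauto.
  - pose proof (base c K Q hQ hc hnear) as h0.
    apply (IHk (fun j => c (S j)) (K * Q) Q hQ).
    { intros j. rewrite hc. simpl. lra. }
    revert hnear. apply near_zero_impl. intros t h ht. specialize (h ht).
    apply cconv_shift, (cconv_mul_l _ _ (Cinv t)) in h.
    replace (Cmul (Cinv t) C0) with C0 in h by ring.
    eapply cconv_ext. 2: exact h. intros n. simpl. rewrite psum_S_shift, h0.
    replace (Cmul (Cinv t) (Cadd C0 (Cmul t (psum (fun k => c (S k)) t n)))) with
      (Cmul (Cmul t (Cinv t)) (psum (fun k => c (S k)) t n)) by ring.
    rewrite Cmul_inv_r by auto. ring.
Qed.

Lemma ps_coef_bound_of_converges a z L : z <> C0 -> cconv (psum a z) L ->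
  exists B, 0 <= B /\ forall k, Cnorm (a k) <= B * (/ Cnorm z) ^ k.
Proof.
  intros hz hc. destruct (cconv_bounded _ _ hc) as [B hB]. pose proof (Cnorm_pos z hz) as hzp.
  exists (2 * Rabs B). split. pose proof (Rabs_pos B); lra. intros k.
  assert (hterm : Cnorm (Cmul (a k) (Cpow z k)) <= 2 * Rabs B).
  { replace (Cmul (a k) (Cpow z k)) with (Csub (psum a z (S k)) (psum a z k)) by (unfold psum; simpl; ring).
    eapply Rle_trans. apply Cnorm_sub_le. pose proof (hB (S k)). pose proof (hB k). pose proof (Rle_abs B). lra. }
  rewrite Cnorm_mul, Cnorm_pow in hterm. assert (0 < Cnorm z ^ k) by (apply pow_lt; auto).
  rewrite pow_inv. apply Rmult_le_reg_r with (Cnorm z ^ k); auto.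
  replace (2 * Rabs B * / Cnorm z ^ k * Cnorm z ^ k) with (2 * Rabs B) by (field; lra). exact hterm.
Qed.

Lemma conv_bound a b K L Q k : 0 <= Q ->
  (forall j, Cnorm (a j) <= K * Q ^ j) -> (forall j, Cnorm (b j) <= L * Q ^ j) ->
  Cnorm (conv a b k) <= Rabs K * Rabs L * (2 * Q) ^ k.
Proof.
  intros hQ ha hb. unfold conv. eapply Rle_trans. apply Cnorm_csum_le.
  apply Rle_trans with (rsum (S k) (fun _ => Rabs K * Rabs L * Q ^ k)).
  - apply rsum_le. intros j hj. rewrite Cnorm_mul.
    replace (Q ^ k) with (Q ^ j * Q ^ (k - j)) by (rewrite <- pow_add; f_equal; lia).
    pose proof (ha j). pose proof (hb (k - j)%nat).
    pose proof (Cnorm_ge0 (a j)). pose proof (Cnorm_ge0 (b (k - j)%nat)).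
    pose proof (Rle_abs K). pose proof (Rle_abs L). pose proof (pow_le Q j hQ). pose proof (pow_le Q (k-j) hQ).
    apply Rle_trans with ((Rabs K * Q ^ j) * (Rabs L * Q ^ (k - j))).
    apply Rmult_le_compat; auto; nra. lra.
  - rewrite rsum_const, Rpow_mult_distr.
    assert (INR k + 1 <= 2 ^ k).
    { clear ha hb. induction k. simpl. lra. rewrite S_INR. simpl. pose proof (pow_R1_Rle 2 k ltac:(lra)). lra. }
    assert (0 <= Rabs K * Rabs L * Q ^ k) by (apply Rmult_le_pos; [apply Rmult_le_pos; apply Rabs_pos| apply pow_le; auto]).
    rewrite S_INR. nra.
Qed.

Lemma psum_conv a b t N :
  psum (conv a b) t N = csum N (fun j => Cmul (Cmul (a j) (Cpow t j)) (psum b t (N - j))).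
Proof.
  induction N. reflexivity.
  change (psum (conv a b) t (S N)) with (Cadd (psum (conv a b) t N) (Cmul (conv a b N) (Cpow t N))).
  assert (hterm : Cmul (conv a b N) (Cpow t N) =
    csum (S N) (fun j => Cmul (Cmul (a j) (Cpow t j)) (Cmul (b (N - j)%nat) (Cpow t (N - j))))).
  { unfold conv. rewrite csum_mul_r. apply csum_ext. intros j hj.
    replace (Cpow t N) with (Cmul (Cpow t j) (Cpow t (N - j))) by (rewrite <- Cpow_add; f_equal; lia). ring. }
  rewrite IHN, hterm, !csum_S. cbv beta. rewrite Nat.sub_diag.
  replace (S N - N)%nat with 1%nat by lia.
  rewrite (csum_ext N (fun j => Cmul (Cmul (a j) (Cpow t j)) (psum b t (S N - j)))
                      (fun j => Cadd (Cmul (Cmul (a j) (Cpow t j)) (psum b t (N - j)))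
                                      (Cmul (Cmul (a j) (Cpow t j)) (Cmul (b (N - j)%nat) (Cpow t (N - j)))))).
  2: { intros j hj. replace (S N - j)%nat with (S (N - j)) by lia. unfold psum. simpl. ring. }
  rewrite csum_add. unfold psum. simpl. ring.
Qed.

Lemma n_quarter_pow_le n : INR n * (1/4)^n <= (1/2)^n.
Proof.
  assert (INR n <= 2 ^ n).
  { induction n. simpl. lra. rewrite S_INR. simpl. pose proof (pow_R1_Rle 2 n ltac:(lra)). lra. }
  replace ((1/4)^n) with ((1/2)^n * (1/2)^n) by (rewrite <- Rpow_mult_distr; f_equal; lra).
  assert (2^n * (1/2)^n = 1) by (rewrite <- Rpow_mult_distr; replace (2 * (1/2)) with 1 by lra; apply pow1).
  pose proof (pow_lt (1/2) n ltac:(lra)). nra.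
Qed.

Lemma psum_tail_le b L Q t m j : 0 <= Q -> Cnorm t * Q <= 1/4 -> (forall k, Cnorm (b k) <= L * Q ^ k) ->
  Cnorm (Csub (psum b t (m + j)) (psum b t m)) <= 2 * Rabs L * (1/4)^m.
Proof.
  intros hQ ht hb. unfold psum. rewrite csum_tail. eapply Rle_trans. apply Cnorm_csum_le.
  apply Rle_trans with (rsum j (fun i => (Rabs L * (1/4)^m) * (1/4)^i)).
  - apply rsum_le. intros i hi. rewrite Rmult_assoc, <- pow_add. eapply ps_term_bound; eauto.
  - rewrite rsum_scal. pose proof (rsum_geom_le j (1/4) ltac:(lra)).
    assert (0 <= Rabs L * (1/4)^m) by (apply Rmult_le_pos; [apply Rabs_pos| apply pow_le; lra]).
    apply Rle_trans with (Rabs L * (1/4)^m * (1 / (1 - 1/4))). apply Rmult_le_compat_l; auto. lra.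
Qed.

Lemma cauchy_product a b K L Q t A B : 0 <= Q -> Cnorm t * Q <= 1/4 ->
  (forall k, Cnorm (a k) <= K * Q ^ k) -> (forall k, Cnorm (b k) <= L * Q ^ k) ->
  cconv (psum a t) A -> cconv (psum b t) B -> cconv (psum (conv a b) t) (Cmul A B).
Proof.
  intros hQ ht ha hb hA hB.
  assert (hdiff : forall N, Cnorm (Csub (Cmul (psum a t N) (psum b t N)) (psum (conv a b) t N))
                             <= 2 * Rabs K * Rabs L * (1/2)^N).
  { intros N. rewrite psum_conv. unfold psum at 1. rewrite csum_mul_r, <- csum_sub.
    eapply Rle_trans. apply Cnorm_csum_le.
    apply Rle_trans with (rsum N (fun _ => 2 * Rabs K * Rabs L * (1/4)^N)).
    - apply rsum_le. intros j hj.
      replace (Csub (Cmul (Cmul (a j) (Cpow t j)) (psum b t N)) (Cmul (Cmul (a j) (Cpow t j)) (psum b t (N - j))))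
        with (Cmul (Cmul (a j) (Cpow t j)) (Csub (psum b t ((N - j) + j)) (psum b t (N - j))))
        by (replace (N - j + j)%nat with N by lia; ring).
      rewrite Cnorm_mul.
      pose proof (ps_term_bound a K Q t (1/4) j hQ ht ha) as h1.
      pose proof (psum_tail_le b L Q t (N - j) j hQ ht hb) as h2.
      pose proof (Cnorm_ge0 (Cmul (a j) (Cpow t j))).
      pose proof (Cnorm_ge0 (Csub (psum b t (N - j + j)) (psum b t (N - j)))).
      replace ((1/4)^N) with ((1/4)^j * (1/4)^(N-j)) by (rewrite <- pow_add; f_equal; lia).
      apply Rle_trans with ((Rabs K * (1/4)^j) * (2 * Rabs L * (1/4)^(N-j))).
      apply Rmult_le_compat; auto. lra.
    - rewrite rsum_const. pose proof (n_quarter_pow_le N).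
      assert (0 <= 2 * Rabs K * Rabs L) by (pose proof (Rabs_pos K); pose proof (Rabs_pos L); nra).
      replace (INR N * (2 * Rabs K * Rabs L * (1 / 4) ^ N)) with ((2 * Rabs K * Rabs L) * (INR N * (1/4)^N)) by ring.
      apply Rmult_le_compat_l; auto. }
  pose proof (cconv_mul _ _ _ _ hA hB) as hAB.
  assert (hD : cconv (fun N => Csub (Cmul (psum a t N) (psum b t N)) (psum (conv a b) t N)) C0).
  { apply (cconv_of_geometric _ _ (2 * Rabs K * Rabs L)). intros N.
    replace (Csub (Csub (Cmul (psum a t N) (psum b t N)) (psum (conv a b) t N)) C0)
      with (Csub (Cmul (psum a t N) (psum b t N)) (psum (conv a b) t N)) by ring. apply hdiff. }
  replace (Cmul A B) with (Csub (Cmul A B) C0) by ring.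
  eapply cconv_ext. 2: exact (cconv_sub _ _ _ _ hAB hD). intros n. simpl. ring.
Qed.

(* The formal quotient [h / g] of two power series, for [g O <> 0]. *)

Fixpoint ps_div_upto (g h : nat -> CC) (n : nat) : nat -> CC :=
  match n with
  | O => fun _ => C0
  | S n' => fun j => if Nat.ltb j n' then ps_div_upto g h n' j
      else Cmul (Csub (h n') (csum n' (fun i => Cmul (ps_div_upto g h n' i) (g (n' - i)%nat)))) (Cinv (g O))
  end.

Definition ps_div (g h : nat -> CC) (k : nat) : CC := ps_div_upto g h (S k) k.

Lemma ps_div_upto_stable g h n j : (j < n)%nat -> ps_div_upto g h n j = ps_div g h j.
Proof.
  revert j. induction n; intros j hj. lia. simpl. destruct (Nat.ltb_spec j n).
  - apply IHn; auto.
  - replace j with n by lia. unfold ps_div. simpl. rewrite Nat.ltb_irrefl. reflexivity.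
Qed.

Lemma ps_div_rec g h k :
  ps_div g h k = Cmul (Csub (h k) (csum k (fun i => Cmul (ps_div g h i) (g (k - i)%nat)))) (Cinv (g O)).
Proof.
  unfold ps_div at 1. simpl. rewrite Nat.ltb_irrefl. do 2 f_equal. apply csum_ext. intros i hi.
  rewrite ps_div_upto_stable; auto.
Qed.

Lemma conv_ps_div g h k : g O <> C0 -> conv (ps_div g h) g k = h k.
Proof.
  intros hg. unfold conv. rewrite csum_S, Nat.sub_diag, ps_div_rec.
  set (X := csum k (fun i => Cmul (ps_div g h i) (g (k - i)%nat))).
  replace (Cadd X (Cmul (Cmul (Csub (h k) X) (Cinv (g O))) (g O))) with
    (Cadd X (Cmul (Csub (h k) X) (Cmul (g O) (Cinv (g O))))) by ring.
  rewrite Cmul_inv_r by auto. ring.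
Qed.

Lemma ps_div_bound g h K L Q : 0 <= K -> 0 <= Q -> g O <> C0 ->
  (forall k, Cnorm (g k) <= K * Q ^ k) -> (forall k, Cnorm (h k) <= L * Q ^ k) ->
  forall k, Cnorm (ps_div g h k) <= L / Cnorm (g O) * ((1 + K / Cnorm (g O)) * Q) ^ k.
Proof.
  intros hK hQ hg0 hg hh. pose proof (Cnorm_pos _ hg0) as hG. set (G := Cnorm (g O)) in *.
  set (c := K / G). assert (hc : 0 <= c) by (unfold c; apply Rmult_le_pos; [lra| left; apply Rinv_0_lt_compat; lra]).
  set (bnd k := L / G * ((1 + c) * Q) ^ k).
  (* the bound is reproduced by the recursion since 1 + c (1 + (1+c) + ... + (1+c)^(k-1)) = (1+c)^k *)
  assert (hgeom : forall k, 1 + c * rsum k (fun i => (1 + c) ^ i) = (1 + c) ^ k).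
  { induction k; simpl. ring. rewrite <- IHk. ring. }
  assert (step : forall k, (forall i, (i < k)%nat -> Cnorm (ps_div g h i) <= bnd i) ->
                           Cnorm (ps_div g h k) <= bnd k).
  { intros k IH. rewrite ps_div_rec, Cnorm_mul, Cnorm_inv by auto. fold G.
    apply Rmult_le_reg_r with G; auto.
    replace (Cnorm (Csub (h k) (csum k (fun i => Cmul (ps_div g h i) (g (k - i)%nat)))) * / G * G)
      with (Cnorm (Csub (h k) (csum k (fun i => Cmul (ps_div g h i) (g (k - i)%nat))))) by (field; lra).
    replace (bnd k * G) with (L * Q ^ k + L * Q ^ k * (c * rsum k (fun i => (1 + c) ^ i)))
      by (unfold bnd; rewrite Rpow_mult_distr, <- hgeom; field; lra).
    eapply Rle_trans. apply Cnorm_sub_le. apply Rplus_le_compat. apply hh.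
    eapply Rle_trans. apply Cnorm_csum_le.
    rewrite <- !rsum_scal. apply rsum_le. intros i hi. rewrite Cnorm_mul.
    pose proof (IH i hi). pose proof (hg (k - i)%nat).
    pose proof (Cnorm_ge0 (ps_div g h i)). pose proof (Cnorm_ge0 (g (k - i)%nat)).
    apply Rle_trans with (bnd i * (K * Q ^ (k - i))). apply Rmult_le_compat; auto.
    unfold bnd, c. replace (Q ^ k) with (Q ^ i * Q ^ (k - i)) by (rewrite <- pow_add; f_equal; lia).
    rewrite Rpow_mult_distr. apply Req_le. field. lra. }
  assert (strong : forall n k, (k <= n)%nat -> Cnorm (ps_div g h k) <= bnd k).
  { induction n; intros k hk; apply step; intros i hi. lia. apply IHn. lia. }
  intros k. apply (strong k k). lia.
Qed.

Lemma psum_sub a b t N : psum (fun k => Csub (a k) (b k)) t N = Csub (psum a t N) (psum b t N).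
Proof. unfold psum. rewrite <- csum_sub. apply csum_ext. intros; ring. Qed.

Lemma ps_quotient_expansion g h (f : CC -> CC) K Q : 0 <= Q -> g O <> C0 ->
  (forall k, Cnorm (g k) <= K * Q ^ k) -> (forall k, Cnorm (h k) <= K * Q ^ k) ->
  near_zero (fun t => exists G, cconv (psum g t) G /\ cconv (psum h t) (Cmul (f t) G)) ->
  exists b, near_zero (fun t => cconv (psum b t) (f t)).
Proof.
  intros hQ hg0 hg hh hnear. pose proof (Cnorm_pos _ hg0) as hG. set (G0 := Cnorm (g O)) in *.
  assert (hK : G0 <= K) by (pose proof (hg O) as h0; simpl in h0; fold G0 in h0; lra).
  assert (hKG : 0 <= K / G0) by (apply Rmult_le_pos; [lra| left; apply Rinv_0_lt_compat; lra]).
  set (Q2 := (1 + K / G0) * Q). assert (hQ2 : Q <= Q2) by (unfold Q2; nra).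
  pose proof (ps_div_bound g h K K Q ltac:(lra) hQ hg0 hg hh) as hb. fold G0 Q2 in hb.
  assert (hg2 : forall k, Cnorm (g k) <= K * Q2 ^ k) by (apply (coef_bound_mono _ _ Q); [lra | split; lra | exact hg]).
  exists (ps_div g h).
  pose proof (near_zero_norm_mul_le Q2 (1/4) ltac:(lra) ltac:(lra)) as hsmall.
  pose proof (near_zero_norm_mul_le Q (G0 / (2 * K + 1)) hQ ltac:(apply Rdiv_lt_0_compat; lra)) as hsmall'.
  generalize (near_zero_and _ _ hnear (near_zero_and _ _ hsmall hsmall')).
  apply near_zero_impl. intros t [[G [hgG hhG]] [ht2 ht]].
  assert (htQ : Cnorm t * Q <= 1/2).
  { assert (Cnorm t * Q <= Cnorm t * Q2) by (apply Rmult_le_compat_l; auto using Cnorm_ge0). lra. }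
  assert (hQ2pos : 0 <= Q2) by lra.
  destruct (ps_converges (ps_div g h) (K / G0) Q2 t hQ2pos ltac:(lra) hb) as [B hB].
  pose proof (cauchy_product _ _ _ _ _ t _ _ hQ2pos ht2 hb hg2 hB hgG) as hprod.
  assert (hhB : cconv (psum h t) (Cmul B G)).
  { eapply cconv_ext. 2: exact hprod. intros N. unfold psum. apply csum_ext. intros k _.
    rewrite conv_ps_div; auto. }
  (* [G = G(t)] stays away from 0 near t = 0 *)
  assert (hGnz : G <> C0).
  { intros ->. pose proof (ps_limit_near_constant g K Q t C0 hQ htQ hg hgG) as hn.
    rewrite Cnorm_sub_sym in hn. replace (Csub (g O) C0) with (g O) in hn by ring. fold G0 in hn.
    rewrite Rabs_right in hn by lra.
    apply Rmult_le_compat_l with (r := 2 * K) in ht. 2: lra.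
    replace (2 * K * (G0 / (2 * K + 1))) with (G0 * (2 * K / (2 * K + 1))) in ht by (field; lra).
    assert (2 * K / (2 * K + 1) < 1).
    { apply Rmult_lt_reg_r with (2 * K + 1). lra. replace (2 * K / (2 * K + 1) * (2 * K + 1)) with (2 * K) by (field; lra). lra. }
    nra. }
  replace (f t) with B. exact hB.
  apply (Cmul_reg_r _ _ G hGnz). exact (cconv_unique _ _ _ hhB hhG).
Qed.

Lemma ps_product_coefficients a g h (f : CC -> CC) K Q : 0 <= Q ->
  (forall k, Cnorm (g k) <= K * Q ^ k) -> (forall k, Cnorm (h k) <= K * Q ^ k) ->
  near_zero (fun t => cconv (psum a t) (f t)) ->
  near_zero (fun t => exists G, cconv (psum g t) G /\ cconv (psum h t) (Cmul (f t) G)) ->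
  forall k, h k = conv a g k.
Proof.
  intros hQ hg hh [r [hr ha]] hnear k.
  assert (hK : 0 <= K) by (pose proof (hg O); pose proof (Cnorm_ge0 (g O)); simpl in *; lra).
  set (z0 := (r/2, 0) : CC).
  assert (hz0n : Cnorm z0 = r/2) by (unfold z0; rewrite Cnorm_real; apply Rabs_right; lra).
  assert (hz0 : z0 <> C0) by (unfold z0; intro e; injection e; lra).
  destruct (ps_coef_bound_of_converges a z0 (f z0) hz0 (ha z0 ltac:(lra))) as [B [hB ha0]].
  rewrite hz0n in ha0.
  pose proof (Rmax_l Q (/ (r/2))) as hQQ'. pose proof (Rmax_r Q (/ (r/2))) as hrQ'. set (Q' := Rmax Q (/ (r/2))) in *.
  assert (hr2 : 0 < / (r/2)) by (apply Rinv_0_lt_compat; lra).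
  assert (ha' : forall k, Cnorm (a k) <= B * Q' ^ k) by (apply (coef_bound_mono _ _ (/ (r/2))); [lra | split; lra | exact ha0]).
  assert (hg' : forall k, Cnorm (g k) <= K * Q' ^ k) by (apply (coef_bound_mono _ _ Q); [lra | split; lra | exact hg]).
  assert (hh' : forall k, Cnorm (h k) <= K * Q' ^ k) by (apply (coef_bound_mono _ _ Q); [lra | split; lra | exact hh]).
  replace (h k) with (Cadd (Csub (h k) (conv a g k)) (conv a g k)) by ring.
  replace (Csub (h k) (conv a g k)) with C0. ring. symmetry.
  apply (ps_coef_zero k (fun j => Csub (h j) (conv a g j)) (Rabs K + Rabs B * Rabs K) (2 * Q')). lra.
  { intros j. eapply Rle_trans. apply Cnorm_sub_le.
    pose proof (hh' j). pose proof (conv_bound a g B K Q' j ltac:(lra) ha' hg').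
    assert (K * Q' ^ j <= Rabs K * (2 * Q') ^ j).
    { rewrite Rabs_right by lra. apply Rmult_le_compat_l; auto. apply pow_incr; lra. }
    rewrite Rmult_plus_distr_r. lra. }
  generalize (near_zero_and _ _ hnear (near_zero_norm_mul_le Q' (1/4) ltac:(lra) ltac:(lra))).
  apply near_zero_impl. intros t [[G [hgG hhG]] ht] _.
  assert (htr : Cnorm t < r).
  { assert (hle : Cnorm t * / (r / 2) <= 1/4).
    { assert (Cnorm t * / (r / 2) <= Cnorm t * Q') by (apply Rmult_le_compat_l; auto using Cnorm_ge0). lra. }
    apply Rmult_le_compat_r with (r := r/2) in hle. 2: lra.
    replace (Cnorm t * / (r / 2) * (r / 2)) with (Cnorm t) in hle by (field; lra). lra. }
  pose proof (cauchy_product a g B K Q' t (f t) G ltac:(lra) ht ha' hg' (ha t htr) hgG) as hprod.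
  replace C0 with (Csub (Cmul (f t) G) (Cmul (f t) G)) by ring.
  eapply cconv_ext. 2: exact (cconv_sub _ _ _ _ hhG hprod). intros N. simpl. symmetry. apply psum_sub.
Qed.

(** * Power series of Jordan chains *)

Section Chains.
Context {H : HilbertSpace}.

Definition vpsum (e : nat -> H) (t : CC) (N : nat) : H := vsum N (fun k => vscale (Cpow t k) (e k)).

Lemma vpsum_converges e K Q t : 0 <= Q -> Cnorm t * Q <= 1/2 -> (forall k, hnorm (e k) <= K * Q ^ k) ->
  exists g, hconv (vpsum e t) g.
Proof.
  intros hQ ht he. apply (vseries_converges _ (Rabs K)). intros k. rewrite hnorm_scale, Cnorm_pow.
  apply Rle_trans with (K * Q ^ k * Cnorm t ^ k).
  - rewrite Rmult_comm. apply Rmult_le_compat_r. apply pow_le, Cnorm_ge0. apply he.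
  - apply pow_bound_mul; auto using Cnorm_ge0.
Qed.

Lemma cconv_inner_vpsum e t g y : hconv (vpsum e t) g ->
  cconv (psum (fun k => inner (e k) y) t) (inner g y).
Proof.
  intros hc. eapply cconv_ext. 2: exact (cconv_inner _ _ y hc).
  intros n. unfold vpsum, psum. rewrite inner_vsum_l. apply csum_ext. intros k _.
  rewrite inner_scale_l. ring.
Qed.

Lemma hconv_vpsum_bounded_op (S : H -> H) e t g : bounded_op S -> hconv (vpsum e t) g ->
  hconv (vpsum (fun k => S (e k)) t) (S g).
Proof.
  intros hS hc. eapply hconv_ext. 2: exact (hconv_bounded_op S _ _ hS hc).
  intros n. unfold vpsum. rewrite bounded_op_vsum by auto.
  apply vsum_ext. intros k _. destruct hS as [_ [h _]]. apply h.
Qed.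

(* [(T - l) (sum t^k e_k) = t (sum t^k e_k)] for a Jordan chain [e] of [T - l]. *)
Lemma jordan_chain_eigenvector (T : H -> H) l e t g : bounded_op T ->
  jordan_chain (op_shift T l) e -> hconv (vpsum e t) g -> eigenspace T (Cadd l t) g.
Proof.
  intros hT [h0 hsucc] hc. set (A := op_shift T l) in *.
  assert (hA : bounded_op A) by (apply op_shift_bounded; auto).
  assert (hstep : forall N, A (vpsum e t (S N)) = vscale t (vpsum e t N)).
  { destruct hA as [ha [hs _]]. induction N; unfold vpsum in *; simpl.
    - rewrite vadd_0_l, hs, h0, !vscale_vzero. reflexivity.
    - simpl in IHN. rewrite ha, IHN, hs, hsucc, vscale_distr_v, vscale_assoc.
      replace (Cmul (Cpow t N) t) with (Cmul t (Cpow t N)) by ring. reflexivity. }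
  assert (hAg : A g = vscale t g).
  { apply (hconv_unique (fun n => A (vpsum e t (S n)))).
    - exact (hconv_shift _ _ (hconv_bounded_op A _ _ hA hc)).
    - eapply hconv_ext. 2: exact (hconv_scale _ _ t hc). intros n. symmetry. apply hstep. }
  unfold eigenspace. unfold A, op_shift in hAg.
  rewrite <- (vsub_add (T g) (vscale l g)), hAg, <- vscale_distr_c. f_equal. ring.
Qed.

Lemma jordan_chain_pairing (T S : H -> H) Om phi l e K Q y :
  bounded_op T -> bounded_op S -> Copen Om -> Om l -> scalar_on_eigenspaces Om T S phi ->
  jordan_chain (op_shift T l) e -> 0 <= Q -> (forall k, hnorm (e k) <= K * Q ^ k) ->
  near_zero (fun t => exists G, cconv (psum (fun k => inner (e k) y) t) G /\
                        cconv (psum (fun k => inner (S (e k)) y) t) (Cmul (phi (Cadd l t)) G)).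
Proof.
  intros hT hS hOm hl hsc hchain hQ he.
  destruct (hOm l hl) as [rho [hrho hball]].
  generalize (near_zero_and _ _ (near_zero_norm_lt rho hrho) (near_zero_norm_mul_le Q (1/2) hQ ltac:(lra))).
  apply near_zero_impl. intros t [htrho ht].
  destruct (vpsum_converges e K Q t hQ ht he) as [g hg].
  pose proof (jordan_chain_eigenvector T l e t g hT hchain hg) as heig.
  assert (hOt : Om (Cadd l t)) by (apply hball; replace (Csub (Cadd l t) l) with t by ring; exact htrho).
  exists (inner g y). split. apply cconv_inner_vpsum, hg.
  rewrite <- inner_scale_l, <- (hsc _ hOt g heig).
  apply cconv_inner_vpsum, hconv_vpsum_bounded_op; auto.
Qed.

Lemma inner_chain_coef_bound (S : H -> H) e K Q y : bounded_op S -> (forall k, hnorm (e k) <= K * Q ^ k) ->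
  exists K', (forall k, Cnorm (inner (e k) y) <= K' * Q ^ k) /\
             (forall k, Cnorm (inner (S (e k)) y) <= K' * Q ^ k).
Proof.
  intros hS he. destruct (bounded_op_norm S hS) as [M [hM hMb]].
  assert (hK : 0 <= K) by (pose proof (he O); pose proof (hnorm_ge0 (e O)); simpl in *; lra).
  pose proof (hnorm_ge0 y).
  exists ((M + 1) * K * hnorm y). split; intros k; eapply Rle_trans; try apply cauchy_schwarz.
  all: pose proof (he k); pose proof (hnorm_ge0 (e k)).
  all: assert (hKy : 0 <= K * Q ^ k * hnorm y) by (apply Rmult_le_pos; lra).
  all: replace ((M + 1) * K * hnorm y * Q ^ k) with ((M + 1) * (K * Q ^ k * hnorm y)) by ring.
  - apply Rle_trans with (K * Q ^ k * hnorm y). apply Rmult_le_compat_r; lra. nra.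
  - pose proof (hMb (e k)). apply Rle_trans with (M * (K * Q ^ k) * hnorm y).
    + apply Rmult_le_compat_r; auto. apply Rle_trans with (M * hnorm (e k)); auto.
      apply Rmult_le_compat_l; lra.
    + nra.
Qed.

Lemma eigenvector_jordan_chain (T : H -> H) l e0 : bounded_op T ->
  (forall y, exists x, op_shift T l x = y) -> eigenspace T l e0 ->
  exists e Q, e O = e0 /\ 0 <= Q /\ jordan_chain (op_shift T l) e /\ forall k, hnorm (e k) <= hnorm e0 * Q ^ k.
Proof.
  intros hT hsurj he0.
  destruct (open_mapping _ (op_shift_bounded T l hT) hsurj) as [c [hc hpre]].
  destruct (preimage_chain _ c hc hpre e0) as [e [he0' [hS hb]]].
  exists e, c. split; auto. split; auto. split; auto. split; auto.
  rewrite he0'. unfold op_shift. rewrite he0. apply vsub_diag.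
Qed.

(* Extend the chain [T^n x, ..., T x, x] of a vector with [T^(n+1) x = 0] by bounded preimages. *)
Lemma nilpotent_jordan_chain (A : H -> H) c n x : 0 <= c ->
  (forall y, exists v, A v = y /\ hnorm v <= c * hnorm y) -> Nat.iter (S n) A x = vzero ->
  exists e K Q, 0 <= Q /\ jordan_chain A e /\ (forall j, (j <= n)%nat -> e (n - j)%nat = Nat.iter j A x) /\
    forall k, hnorm (e k) <= K * Q ^ k.
Proof.
  intros hc hpre hx. destruct (preimage_chain A c hc hpre x) as [f [hf0 [hf hfb]]].
  set (e k := if Nat.ltb k n then Nat.iter (n - k) A x else f (k - n)%nat).
  set (K := rsum (S n) (fun j => hnorm (Nat.iter j A x))).
  assert (hK : forall j, (j <= n)%nat -> hnorm (Nat.iter j A x) <= K).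
  { intros j hj. apply (rsum_elem_le (S n) (fun j => hnorm (Nat.iter j A x))); [intros; apply hnorm_ge0|lia]. }
  pose proof (Rmax_l c 1). pose proof (Rmax_r c 1). set (Q := Rmax c 1) in *.
  exists e, K, Q. split; [lra|split; [split|split]].
  - unfold e. destruct (Nat.ltb_spec 0 n) as [hn|hn].
    + rewrite <- hx. replace (S n) with (S (n - 0)) by lia. reflexivity.
    + replace (0 - n)%nat with O by lia. rewrite hf0. replace n with O in hx by lia. exact hx.
  - intros k. unfold e. destruct (Nat.ltb_spec (S k) n); destruct (Nat.ltb_spec k n); try lia.
    + replace (n - k)%nat with (S (n - S k)) by lia. reflexivity.
    + replace (S k - n)%nat with O by lia. replace (n - k)%nat with 1%nat by lia. rewrite hf0. reflexivity.
    + replace (S k - n)%nat with (S (k - n)) by lia. apply hf.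
  - intros j hj. unfold e. destruct (Nat.ltb_spec (n - j) n).
    + f_equal. lia.
    + replace j with O by lia. replace (n - 0 - n)%nat with O by lia. rewrite hf0. reflexivity.
  - intros k. pose proof (pow_R1_Rle Q k ltac:(lra)). assert (0 <= K) by (pose proof (hK O ltac:(lia)); pose proof (hnorm_ge0 x); simpl in *; lra).
    unfold e. destruct (Nat.ltb_spec k n).
    + pose proof (hK (n - k)%nat ltac:(lia)). nra.
    + eapply Rle_trans. apply hfb. pose proof (hK O ltac:(lia)) as hx0. simpl in hx0.
      apply Rmult_le_compat; auto using hnorm_ge0. apply pow_le; lra.
      apply Rle_trans with (Q ^ (k - n)). apply pow_incr; lra. apply Rle_pow; lia || lra.
Qed.

End Chains.

Lemma kernel_dim_eigenvector {H : HilbertSpace} (T : H -> H) w m : (1 <= m)%nat -> kernel_dim T w m ->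
  exists e0, e0 <> vzero /\ eigenspace T w e0.
Proof.
  intros hm [e [heig [hind _]]]. exists (e O). split; [|apply heig; lia].
  intros h0. set (c i := if Nat.eqb i 0 then C1 else C0).
  assert (hc : vsum m (fun i => vscale (c i) (e i)) = vzero).
  { apply vsum_zero. intros k _. unfold c. destruct (Nat.eqb_spec k 0) as [->|_].
    - rewrite h0. apply vscale_vzero.
    - apply vscale_C0. }
  pose proof (hind c hc O ltac:(lia)) as e10. unfold c in e10. simpl in e10.
  injection e10. lra.
Qed.

Lemma scalar_function_analytic_at {H : HilbertSpace} (T S : H -> H) Om phi m l :
  (1 <= m)%nat -> bounded_op T -> bounded_op S -> Copen Om -> Om l ->
  (forall y, exists x, op_shift T l x = y) -> kernel_dim T l m -> scalar_on_eigenspaces Om T S phi ->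
  exists r, 0 < r /\ exists b, forall z, Cnorm (Csub z l) < r -> power_series_converges_to b l z (phi z).
Proof.
  intros hm hT hS hOm hl hsurj hker hsc.
  destruct (kernel_dim_eigenvector T l m hm hker) as [e0 [hne he0]].
  destruct (eigenvector_jordan_chain T l e0 hT hsurj he0) as [e [Q [he0' [hQ [hchain hb]]]]].
  destruct (inner_chain_coef_bound S e _ Q e0 hS hb) as [K [hg hh]].
  assert (hg0 : inner (e O) e0 <> C0) by (rewrite he0'; intros h; apply hne, inner_def, h).
  destruct (ps_quotient_expansion _ _ (fun t => phi (Cadd l t)) K Q hQ hg0 hg hh
              (jordan_chain_pairing T S Om phi l e _ Q e0 hT hS hOm hl hsc hchain hQ hb))
    as [b [r [hr hbr]]].
  exists r. split; auto. exists b. intros z hz. apply power_series_converges_to_psum.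
  replace (phi z) with (phi (Cadd l (Csub z l))) by (f_equal; ring). apply hbr, hz.
Qed.

Lemma scalar_on_nilpotent_kernel {H : HilbertSpace} (T S : H -> H) Om phi a n x :
  bounded_op T -> bounded_op S -> Copen Om -> Om C0 -> (forall y, exists v, op_shift T C0 v = y) ->
  scalar_on_eigenspaces Om T S phi -> near_zero (fun t => cconv (psum a t) (phi t)) ->
  (1 <= n)%nat -> Nat.iter n T x = vzero -> S x = vsum n (fun k => vscale (a k) (Nat.iter k T x)).
Proof.
  intros hT hS hOm hO0 hsurj hsc ha hn hx. destruct n as [|n]; [lia|].
  destruct (open_mapping _ (op_shift_bounded T C0 hT) hsurj) as [c [hc hpre]].
  setoid_rewrite op_shift_C0 in hpre.
  destruct (nilpotent_jordan_chain T c n x hc hpre hx) as [e [K [Q [hQ [[h0 hsucc] [hex hb]]]]]].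
  assert (hchain : jordan_chain (op_shift T C0) e) by (split; intros; rewrite op_shift_C0; auto).
  pose proof (hex O ltac:(lia)) as hen. rewrite Nat.sub_0_r in hen. simpl in hen.
  apply vector_eq_of_inner. intros y.
  destruct (inner_chain_coef_bound S e K Q y hS hb) as [K' [hg hh]].
  pose proof (jordan_chain_pairing T S Om phi C0 e K Q y hT hS hOm hO0 hsc hchain hQ hb) as hpair.
  assert (hpair' : near_zero (fun t => exists G, cconv (psum (fun k => inner (e k) y) t) G /\
                     cconv (psum (fun k => inner (S (e k)) y) t) (Cmul (phi t) G))).
  { revert hpair. apply near_zero_impl. intros t. replace (Cadd C0 t) with t by ring. auto. }
  pose proof (ps_product_coefficients a _ _ phi K' Q hQ hg hh ha hpair' n) as hcoef.
  cbv beta in hcoef. rewrite hen in hcoef. rewrite hcoef, inner_vsum_l.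
  apply csum_ext. intros j hj. rewrite inner_scale_l, hex by lia. reflexivity.
Qed.

Theorem proposition5p5 (H : HilbertSpace) (m : nat) (Om : CC -> Prop)
  (T S : H -> H) (phi : CC -> CC) :
  (1 <= m)%nat ->
  Copen Om -> Cconnected Om -> Om C0 ->
  CowenDouglas m Om T ->
  in_commutant T S ->
  scalar_on_eigenspaces Om T S phi ->
  analytic_on Om phi /\
  (forall (r : R) (a : nat -> CC), 0 < r ->
     (forall z, Cnorm z < r -> power_series_converges_to a C0 z (phi z)) ->
     forall n : nat, (1 <= n)%nat ->
     forall x : H, Nat.iter n T x = vzero ->
       S x = vsum n (fun k => vscale (a k) (Nat.iter k T x))).
Proof.
  intros hm hOm _ hO0 [hT [_ [hsurj [_ hker]]]] [hS _] hsc. split.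
  - intros l hl. exact (scalar_function_analytic_at T S Om phi m l hm hT hS hOm hl (hsurj l hl) (hker l hl) hsc).
  - intros r a hr ha n hn x hx.
    apply (scalar_on_nilpotent_kernel T S Om phi a n x hT hS hOm hO0 (hsurj C0 hO0) hsc); auto.
    exists r. split; auto. intros t ht. specialize (ha t ht).
    rewrite power_series_converges_to_psum in ha. replace (Csub t C0) with t in ha by ring. exact ha.
Qed.
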